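(* Let $U\subset\mathbb S^2$ be open, let $(F^{ij})$ be a symmetric $2$-tensor field in $C^1(U)$ satisfying $\lambda|\xi|^2\le F^{ij}\xi_i\xi_j\le\Lambda|\xi|^2$ on $U$ for constants $\Lambda\ge\lambda>0$, and let $u\in C^3(U)$ satisfy $F^{ij}(u_{ij}+u\delta_{ij})=0$ in $U$. Then there are constants $C_1,C_2$ depending only on the $C^1$-norm of $F^{ij}$ (and on $\lambda,\Lambda$) such that, for every unit vector $E\in\mathbb R^3$, $$F^{ij}(\rho_u)_{ij}\ge-C_1|\nabla\rho_u|,\qquad F^{ij}(\phi_E)_{ij}\ge-C_2|\nabla\phi_E|\quad\text{in }U.$$
   Context: For $u\in C^1(\mathbb S^2)$ and a local orthonormal frame $e_1,e_2$ on $\mathbb S^2$, define the vector field $X_u(x)=\sum_{i=1}^2u_i(x)e_i+u(x)\,x\in\mathbb R^3$ (here $x$ is the position vector, i.e. the unit normal of $\mathbb S^2$ at $x$). For a unit vector $E\in\mathbb R^3$ set $\phi_E(x)=\langle E,X_u(x)\rangle$ and $\rho_u(x)=|X_u(x)|^2$, with $\langle\cdot,\cdot\rangle$ the Euclidean inner product. Subscripts denote covariant derivatives on $\mathbb S^2$. *)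

From Stdlib Require Import Reals Lra.
Open Scope R_scope.

Definition R3 := (R * R * R)%type.
Definition mk3 (a b c : R) : R3 := (a, b, c).
Definition cf (p : R3) (i : nat) : R :=
  match i with 0 => fst (fst p) | 1 => snd (fst p) | _ => snd p end.
Definition sum3 (f : nat -> R) : R := f 0%nat + f 1%nat + f 2%nat.
Definition vadd (p q : R3) : R3 := mk3 (cf p 0 + cf q 0) (cf p 1 + cf q 1) (cf p 2 + cf q 2).
Definition vscal (t : R) (p : R3) : R3 := mk3 (t * cf p 0) (t * cf p 1) (t * cf p 2).
Definition vsub (p q : R3) : R3 := vadd p (vscal (-1) q).
Definition dot (p q : R3) : R := sum3 (fun i => cf p i * cf q i).
Definition norm3 (p : R3) : R := sqrt (dot p p).
Definition ebase (i : nat) : R3 :=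
  match i with 0 => mk3 1 0 0 | 1 => mk3 0 1 0 | _ => mk3 0 0 1 end.

Definition S2open (U : R3 -> Prop) : Prop :=
  (forall x, U x -> norm3 x = 1) /\
  (forall x, U x -> exists d, 0 < d /\
     forall y, norm3 y = 1 -> norm3 (vsub y x) < d -> U y).

Definition cone (U : R3 -> Prop) (y : R3) : Prop :=
  y <> mk3 0 0 0 /\ U (vscal (/ norm3 y) y).

(* 0-homogeneous extension of a function on S^2 (only values on S^2 matter). *)
Definition ext0 (f : R3 -> R) (y : R3) : R := f (vscal (/ norm3 y) y).

Definition is_partial (f : R3 -> R) (i : nat) (g : R3 -> R) (V : R3 -> Prop) : Prop :=
  forall x, V x -> derivable_pt_lim (fun t => f (vadd x (vscal t (ebase i)))) 0 (g x).

Definition cont3 (f : R3 -> R) (V : R3 -> Prop) : Prop :=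
  forall x, V x -> forall eps, 0 < eps -> exists d, 0 < d /\
    forall y, V y -> norm3 (vsub y x) < d -> Rabs (f y - f x) < eps.

Definition grad (D : nat -> R3 -> R) (x : R3) : R3 := mk3 (D 0%nat x) (D 1%nat x) (D 2%nat x).

(* X_u = sum_i u_i e_i + u x ; Du = ambient gradient of the 0-homogeneous
   extension of u, which on S^2 is the spherical gradient. *)
Definition Xu (u : R3 -> R) (Du : nat -> R3 -> R) (x : R3) : R3 :=
  vadd (grad Du x) (vscal (u x) x).
Definition rho_u (u : R3 -> R) (Du : nat -> R3 -> R) (x : R3) : R :=
  dot (Xu u Du x) (Xu u Du x).
Definition phi_E (E : R3) (u : R3 -> R) (Du : nat -> R3 -> R) (x : R3) : R :=
  dot E (Xu u Du x).

(* Contraction F^{ij} A_{ij} with F stored as a tangential symmetric 3x3 matrix. *)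
Definition contr (F : nat -> nat -> R3 -> R) (A : nat -> nat -> R3 -> R) (x : R3) : R :=
  sum3 (fun a => sum3 (fun b => F a b x * A a b x)).
Definition quadF (F : nat -> nat -> R3 -> R) (x xi : R3) : R :=
  sum3 (fun a => sum3 (fun b => F a b x * cf xi a * cf xi b)).

From Stdlib Require Import Reals Lra Lia Psatz.
Open Scope R_scope.

(* Write p = Du(x) and W for the tensor u_ij + u δ_ij at a point x of U.  Using
   the differentiated equation, the tangency of F and the homogeneity of the
   0-homogeneous extensions, the third derivatives of u drop out and
     F^{ij}(ρ_u)_ij = 2 Σ_j F(W e_j, W e_j) - 2 Σ_j p_j ∂_j F^{ab} W_ab,
     F^{ij}(φ_E)_ij = - Σ_j E_j ∂_j F^{ab} W_ab,
   while ∇ρ_u = 2 W p and ∇φ_E = W E^T, E^T the tangential part of E.  The first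
   sum is nonnegative by ellipticity, so both estimates reduce to
   |Σ_j v_j ∂_j F^{ab} W_ab| <= C |W v| for tangent v.  In the frame q = v/|v|,
   r = x × q write W = A q⊗q + B (q⊗r + r⊗q) + D r⊗r.  Then |W v| = |v| √(A² + B²),
   and F^{ab} W_ab = 0 together with F(r, r) >= λ bounds |D| by (|A| + 2|B|) Λ/λ. *)

Ltac vec_unfold := unfold norm3, dot, sum3, vsub, vadd, vscal, mk3, cf in *; simpl in *.

Lemma Rabs_le_inv x a : Rabs x <= a -> - a <= x <= a.
Proof. unfold Rabs; destruct (Rcase_abs x); lra. Qed.

Lemma R3_ext p q : cf p 0 = cf q 0 -> cf p 1 = cf q 1 -> cf p 2 = cf q 2 -> p = q.
Proof. destruct p as [[a b] c]; destruct q as [[d e] f]; simpl; intros; subst; auto. Qed.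

Lemma cf_vadd z y i : cf (vadd z y) i = cf z i + cf y i.
Proof. destruct z as [[a b] c]; destruct y as [[d e] f]; destruct i as [|[|i]]; vec_unfold; ring. Qed.

Lemma cf_vsub z y i : cf (vsub z y) i = cf z i - cf y i.
Proof. destruct z as [[a b] c]; destruct y as [[d e] f]; destruct i as [|[|i]]; vec_unfold; ring. Qed.

Lemma cf_vscal s y i : cf (vscal s y) i = s * cf y i.
Proof. destruct y as [[d e] f]; destruct i as [|[|i]]; vec_unfold; ring. Qed.

Ltac vec_ext := apply R3_ext; repeat rewrite ?cf_vadd, ?cf_vsub, ?cf_vscal.

Lemma vscal_vscal s t y : vscal s (vscal t y) = vscal (s * t) y.
Proof. vec_ext; ring. Qed.

Lemma vscal_1 y : vscal 1 y = y.
Proof. vec_ext; ring. Qed.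

Lemma dot_self_ge0 y : 0 <= dot y y.
Proof. destruct y as [[a b] c]; vec_unfold; nra. Qed.

Lemma dot_self_pos y : y <> mk3 0 0 0 -> 0 < dot y y.
Proof.
  destruct y as [[a b] c]; vec_unfold; intros H.
  destruct (Req_dec a 0); destruct (Req_dec b 0); destruct (Req_dec c 0); subst;
    try (exfalso; apply H; reflexivity); nra.
Qed.

Lemma norm3_ge0 y : 0 <= norm3 y.
Proof. apply sqrt_pos. Qed.

Lemma norm3_pos y : y <> mk3 0 0 0 -> 0 < norm3 y.
Proof. intros H; apply sqrt_lt_R0, dot_self_pos, H. Qed.

Lemma norm3_sqr y : norm3 y * norm3 y = dot y y.
Proof. apply sqrt_sqrt, dot_self_ge0. Qed.

Lemma norm3_vscal s y : norm3 (vscal s y) = Rabs s * norm3 y.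
Proof.
  unfold norm3.
  replace (dot (vscal s y) (vscal s y)) with ((s * s) * dot y y)
    by (destruct y as [[a b] c]; vec_unfold; ring).
  rewrite sqrt_mult_alt by nra. rewrite <- (sqrt_Rsqr_abs s). reflexivity.
Qed.

Lemma dot_le_norm3 y z : dot y z <= norm3 y * norm3 z.
Proof.
  assert (L : dot y z * dot y z <= dot y y * dot z z).
  { destruct y as [[a b] c]; destruct z as [[d e] f]; vec_unfold.
    pose proof (Rle_0_sqr (a * e - b * d)); pose proof (Rle_0_sqr (a * f - c * d));
    pose proof (Rle_0_sqr (b * f - c * e)); unfold Rsqr in *; nra. }
  pose proof (norm3_ge0 y); pose proof (norm3_ge0 z).
  destruct (Rle_or_lt (dot y z) 0); [nra|].
  rewrite <- (norm3_sqr y), <- (norm3_sqr z) in L.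
  apply Rsqr_incr_0_var; [unfold Rsqr; nra | nra].
Qed.

Lemma norm3_triangle y z : norm3 (vadd y z) <= norm3 y + norm3 z.
Proof.
  pose proof (norm3_ge0 y); pose proof (norm3_ge0 z); pose proof (norm3_ge0 (vadd y z)).
  assert (dot (vadd y z) (vadd y z) = dot y y + 2 * dot y z + dot z z)
    by (destruct y as [[a b] c]; destruct z as [[d e] f]; vec_unfold; ring).
  pose proof (dot_le_norm3 y z). rewrite <- !norm3_sqr in H2. nra.
Qed.

Lemma norm3_reverse_triangle z y : Rabs (norm3 y - norm3 z) <= norm3 (vsub z y).
Proof.
  assert (Ey : y = vadd z (vsub y z)) by (vec_ext; ring).
  assert (Ez : z = vadd y (vsub z y)) by (vec_ext; ring).
  assert (Esym : norm3 (vsub y z) = norm3 (vsub z y)).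
  { replace (vsub y z) with (vscal (-1) (vsub z y)) by (vec_ext; ring).
    rewrite norm3_vscal, Rabs_left by lra; ring. }
  pose proof (norm3_triangle z (vsub y z)); pose proof (norm3_triangle y (vsub z y)).
  rewrite <- Ey in H; rewrite <- Ez in H0. apply Rabs_le; lra.
Qed.

Definition abs_sum3 (v : R3) : R := Rabs (cf v 0) + Rabs (cf v 1) + Rabs (cf v 2).

Lemma abs_sum3_ge0 v : 0 <= abs_sum3 v.
Proof.
  unfold abs_sum3.
  pose proof (Rabs_pos (cf v 0)); pose proof (Rabs_pos (cf v 1)); pose proof (Rabs_pos (cf v 2)); lra.
Qed.

Lemma abs_sum3_vscal s v : abs_sum3 (vscal s v) = Rabs s * abs_sum3 v.
Proof. unfold abs_sum3; rewrite !cf_vscal, !Rabs_mult; ring. Qed.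

Lemma norm3_le_abs_sum3 v : norm3 v <= abs_sum3 v.
Proof.
  pose proof (norm3_ge0 v); pose proof (abs_sum3_ge0 v).
  apply Rsqr_incr_0_var; auto. unfold Rsqr. rewrite norm3_sqr.
  unfold abs_sum3; destruct v as [[a b] c]; vec_unfold.
  pose proof (Rabs_pos a); pose proof (Rabs_pos b); pose proof (Rabs_pos c).
  pose proof (Rsqr_abs a); pose proof (Rsqr_abs b); pose proof (Rsqr_abs c); unfold Rsqr in *.
  nra.
Qed.

Lemma abs_cf_le_norm3 v i : Rabs (cf v i) <= norm3 v.
Proof.
  apply Rsqr_incr_0_var; [|apply norm3_ge0]. unfold Rsqr. rewrite norm3_sqr.
  rewrite <- Rabs_mult, Rabs_pos_eq by nra.
  destruct v as [[a b] c]; destruct i as [|[|i]]; vec_unfold; nra.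
Qed.

Lemma norm3_zero : norm3 (mk3 0 0 0) = 0.
Proof. unfold norm3, dot, sum3; simpl. replace (0 * 0 + 0 * 0 + 0 * 0) with 0 by ring. apply sqrt_0. Qed.

Lemma sphere_nonzero y : norm3 y = 1 -> y <> mk3 0 0 0.
Proof. intros H E. rewrite E, norm3_zero in H. lra. Qed.

Lemma vscal_nonzero s y : s <> 0 -> y <> mk3 0 0 0 -> vscal s y <> mk3 0 0 0.
Proof.
  intros Hs Hy E. apply norm3_pos in Hy. pose proof (Rabs_pos_lt s Hs).
  pose proof (norm3_vscal s y) as Hn. rewrite E, norm3_zero in Hn. nra.
Qed.

Lemma norm3_normalize y : y <> mk3 0 0 0 -> norm3 (vscal (/ norm3 y) y) = 1.
Proof.
  intros H. pose proof (norm3_pos y H).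
  rewrite norm3_vscal, Rabs_pos_eq by (left; apply Rinv_0_lt_compat; lra). field. lra.
Qed.

Lemma normalize_vscal s y : 0 < s -> y <> mk3 0 0 0 ->
  vscal (/ norm3 (vscal s y)) (vscal s y) = vscal (/ norm3 y) y.
Proof.
  intros Hs H. pose proof (norm3_pos y H).
  rewrite norm3_vscal, Rabs_pos_eq, vscal_vscal by lra. f_equal. field. lra.
Qed.

Lemma ext0_vscal f s y : 0 < s -> y <> mk3 0 0 0 -> ext0 f (vscal s y) = ext0 f y.
Proof. intros. unfold ext0. rewrite normalize_vscal; auto. Qed.

Lemma ext0_sphere f y : norm3 y = 1 -> ext0 f y = f y.
Proof. intros H; unfold ext0; rewrite H, Rinv_1, vscal_1; auto. Qed.

Lemma cone_vscal U s y : 0 < s -> cone U y -> cone U (vscal s y).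
Proof.
  intros Hs [H1 H2]; split.
  - apply vscal_nonzero; auto; lra.
  - rewrite normalize_vscal; auto.
Qed.

Lemma cone_sphere U x : S2open U -> U x -> cone U x.
Proof.
  intros [H1 _] Hx. split.
  - apply sphere_nonzero; auto.
  - rewrite (H1 x Hx), Rinv_1, vscal_1; auto.
Qed.

Lemma cone_open U y : S2open U -> cone U y ->
  exists del, 0 < del /\ forall z, norm3 (vsub z y) < del -> cone U z.
Proof.
  intros HU [Hy0 Hy]. pose proof (norm3_pos y Hy0) as HN. set (N := norm3 y) in *.
  destruct HU as [HU1 HU2]. destruct (HU2 _ Hy) as [d [Hd Hd2]].
  exists (Rmin (N / 2) (d * N / 4)). split; [apply Rmin_pos; nra|].
  intros z Hz. pose proof (Rmin_l (N / 2) (d * N / 4)); pose proof (Rmin_r (N / 2) (d * N / 4)).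
  pose proof (norm3_reverse_triangle z y) as Hrev. fold N in Hrev. apply Rabs_le_inv in Hrev.
  assert (Hzp : N / 2 < norm3 z) by lra.
  assert (Hz0 : z <> mk3 0 0 0) by (intro E; rewrite E, norm3_zero in Hzp; lra).
  split; auto. apply Hd2; [apply norm3_normalize; auto|].
  set (M := norm3 z) in *.
  (* the distance of the projections is at most 2 |z - y| / |z| *)
  assert (E : vsub (vscal (/ M) z) (vscal (/ N) y) = vadd (vscal (/ M) (vsub z y)) (vscal (/ M - / N) y))
    by (vec_ext; ring).
  rewrite E. eapply Rle_lt_trans; [apply norm3_triangle|].
  rewrite !norm3_vscal. fold N.
  rewrite (Rabs_pos_eq (/ M)) by (left; apply Rinv_0_lt_compat; lra).
  replace (/ M - / N) with ((N - M) / (M * N)) by (field; lra).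
  unfold Rdiv; rewrite Rabs_mult, Rabs_inv, (Rabs_pos_eq (M * N)) by nra.
  assert (Rabs (N - M) <= norm3 (vsub z y)) by (apply Rabs_le; lra).
  apply Rle_lt_trans with (2 * norm3 (vsub z y) / M).
  { replace (Rabs (N - M) * / (M * N) * N) with (Rabs (N - M) * / M) by (field; lra).
    assert (0 < / M) by (apply Rinv_0_lt_compat; lra). unfold Rdiv. nra. }
  apply Rmult_lt_reg_r with M; [lra|]. unfold Rdiv. rewrite Rmult_assoc, Rinv_l by lra. nra.
Qed.

Definition line (y : R3) (i : nat) (t : R) : R3 := vadd y (vscal t (ebase i)).

Lemma line_0 y i : line y i 0 = y.
Proof. unfold line; vec_ext; ring. Qed.

Lemma line_line y i s t : line (line y i s) i t = line y i (s + t).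
Proof. unfold line; vec_ext; ring. Qed.

Lemma line_comm y k l a b : line (line y k a) l b = line (line y l b) k a.
Proof. unfold line; vec_ext; ring. Qed.

Lemma cf_line y k s i : cf (line y k s) i = cf y i + s * cf (ebase k) i.
Proof. unfold line; rewrite cf_vadd, cf_vscal; reflexivity. Qed.

Lemma norm3_line y i t : norm3 (vsub (line y i t) y) = Rabs t.
Proof.
  replace (vsub (line y i t) y) with (vscal t (ebase i)) by (unfold line; vec_ext; ring).
  assert (Hd : dot (ebase i) (ebase i) = 1) by (destruct i as [|[|i]]; vec_unfold; ring).
  rewrite norm3_vscal. unfold norm3. rewrite Hd, sqrt_1. ring.
Qed.

Lemma norm3_line_line y k l a b :
  norm3 (vsub (line (line y k a) l b) y) <= Rabs a + Rabs b.
Proof.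
  replace (vsub (line (line y k a) l b) y)
    with (vadd (vsub (line (line y k a) l b) (line y k a)) (vsub (line y k a) y)) by (vec_ext; ring).
  eapply Rle_trans; [apply norm3_triangle|]. rewrite !norm3_line. lra.
Qed.

Lemma line_in_cone U y i : S2open U -> cone U y ->
  exists del, 0 < del /\ forall t, Rabs t < del -> cone U (line y i t).
Proof.
  intros HU Hy. destruct (cone_open U y HU Hy) as [d [Hd H]].
  exists d; split; [lra|]. intros t Ht. apply H. rewrite norm3_line; auto.
Qed.

Lemma d_plus f g x a b : derivable_pt_lim f x a -> derivable_pt_lim g x b ->
  derivable_pt_lim (fun t => f t + g t) x (a + b).
Proof. intros; apply (derivable_pt_lim_plus f g); auto. Qed.

Lemma d_minus f g x a b : derivable_pt_lim f x a -> derivable_pt_lim g x b ->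
  derivable_pt_lim (fun t => f t - g t) x (a - b).
Proof. intros; apply (derivable_pt_lim_minus f g); auto. Qed.

Lemma d_mult f g x a b : derivable_pt_lim f x a -> derivable_pt_lim g x b ->
  derivable_pt_lim (fun t => f t * g t) x (a * g x + f x * b).
Proof. intros; apply (derivable_pt_lim_mult f g); auto. Qed.

Lemma d_opp f x a : derivable_pt_lim f x a -> derivable_pt_lim (fun t => - f t) x (- a).
Proof. intros; apply (derivable_pt_lim_opp f); auto. Qed.

Lemma d_const c x : derivable_pt_lim (fun _ => c) x 0.
Proof. apply (derivable_pt_lim_const c). Qed.

Lemma d_id x : derivable_pt_lim (fun t => t) x 1.
Proof. apply derivable_pt_lim_id. Qed.

Lemma d_eq f x l l' : derivable_pt_lim f x l -> l = l' -> derivable_pt_lim f x l'.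
Proof. intros H ->; auto. Qed.

Lemma d_local f g x l d : 0 < d -> (forall t, Rabs (t - x) < d -> f t = g t) ->
  derivable_pt_lim f x l -> derivable_pt_lim g x l.
Proof.
  intros Hd E H eps Heps. destruct (H eps Heps) as [del Hdel].
  assert (Hm : 0 < Rmin del d) by (apply Rmin_pos; [apply cond_pos|lra]).
  exists (mkposreal _ Hm). intros h Hh Hlt. simpl in Hlt.
  rewrite <- (E (x + h)), <- (E x).
  - apply Hdel; auto. apply Rlt_le_trans with (1 := Hlt); apply Rmin_l.
  - rewrite Rminus_diag, Rabs_R0; lra.
  - replace (x + h - x) with h by ring. apply Rlt_le_trans with (1 := Hlt); apply Rmin_r.
Qed.

Lemma d_ext f g x l : (forall t, f t = g t) -> derivable_pt_lim f x l -> derivable_pt_lim g x l.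
Proof. intros E. apply (d_local f g x l 1); [lra|]. intros; auto. Qed.

Lemma d_inv f x l : derivable_pt_lim f x l -> f x <> 0 ->
  derivable_pt_lim (fun t => / f t) x (- l / (f x * f x)).
Proof.
  intros H Hn.
  pose proof (derivable_pt_lim_div (fun _ => 1) f x 0 l (d_const 1 x) H Hn) as H2.
  apply (d_ext (fun t => 1 / f t)); [intros; unfold Rdiv; ring|].
  apply (d_eq _ _ _ _ H2). unfold Rsqr. field. auto.
Qed.

Lemma d_sqrt f x l : derivable_pt_lim f x l -> 0 < f x ->
  derivable_pt_lim (fun t => sqrt (f t)) x (l / (2 * sqrt (f x))).
Proof.
  intros H Hp.
  apply (d_eq _ _ _ _ (derivable_pt_lim_comp f sqrt x l _ H (derivable_pt_lim_sqrt _ Hp))).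
  unfold Rdiv. ring.
Qed.

Lemma d_scale (g : R -> R) x a l : derivable_pt_lim g (a * x) l ->
  derivable_pt_lim (fun t => g (a * t)) x (l * a).
Proof.
  intros H.
  assert (Ha : derivable_pt_lim (fun t => a * t) x a)
    by (apply (d_eq _ _ (0 * x + a * 1)); [apply d_mult; [apply d_const|apply d_id]|ring]).
  exact (derivable_pt_lim_comp (fun t => a * t) g x a l Ha H).
Qed.

Ltac dcalc_with tac := eapply d_eq;
  [ repeat first [ apply d_plus | apply d_minus | apply d_mult | apply d_opp | apply d_id
                 | apply d_const | tac ]
  | cbv beta ].

Lemma mvt_signed g g' a b :
  (forall c, Rmin a b <= c <= Rmax a b -> derivable_pt_lim g c (g' c)) ->
  exists c, Rmin a b <= c <= Rmax a b /\ g b - g a = g' c * (b - a).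
Proof.
  intros H. destruct (Rtotal_order a b) as [Hab|[Hab|Hab]].
  - destruct (MVT_cor2 g g' a b Hab) as [c [E Hc]].
    + intros c Hc; apply H. rewrite Rmin_left, Rmax_right by lra; lra.
    + exists c. rewrite Rmin_left, Rmax_right by lra. split; [lra|auto].
  - subst. exists b. rewrite Rmin_left, Rmax_left by lra. split; [lra|ring].
  - destruct (MVT_cor2 g g' b a Hab) as [c [E Hc]].
    + intros c Hc; apply H. rewrite Rmin_right, Rmax_left by lra; lra.
    + exists c. rewrite Rmin_right, Rmax_left by lra. split; [lra|]. lra.
Qed.

Lemma Rabs_between_0 c a : Rmin 0 a <= c <= Rmax 0 a -> Rabs c <= Rabs a.
Proof.
  intros [H1 H2]. unfold Rmin, Rmax in *.
  destruct (Rle_dec 0 a); unfold Rabs; destruct (Rcase_abs c); destruct (Rcase_abs a); lra.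
Qed.

Lemma is_partial_line f i Df V y s : is_partial f i Df V -> V (line y i s) ->
  derivable_pt_lim (fun t => f (line y i t)) s (Df (line y i s)).
Proof.
  intros H Hv eps Heps. destruct (H _ Hv eps Heps) as [del Hdel].
  exists del. intros h Hh Hlt. specialize (Hdel h Hh Hlt).
  fold (line (line y i s) i (0 + h)) (line (line y i s) i 0) in Hdel.
  rewrite !line_line, Rplus_0_r, Rplus_0_l in Hdel. exact Hdel.
Qed.

Lemma mvt_line f Dk k V P a : is_partial f k Dk V ->
  (forall s, Rmin 0 a <= s <= Rmax 0 a -> V (line P k s)) ->
  exists c, Rabs c <= Rabs a /\ f (line P k a) - f P = Dk (line P k c) * a.
Proof.
  intros H Hv.
  destruct (mvt_signed (fun s => f (line P k s)) (fun s => Dk (line P k s)) 0 a) as [c [Hc E]].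
  - intros c Hc. apply (is_partial_line f k Dk V); auto.
  - exists c; split; [apply Rabs_between_0; auto|]. rewrite line_0 in E. rewrite E; ring.
Qed.

Lemma staircase_mvt f Df V y a :
  (forall k, (k < 3)%nat -> is_partial f k (Df k) V) ->
  (forall z, norm3 (vsub z y) <= abs_sum3 a -> V z) ->
  exists z0 z1 z2,
    norm3 (vsub z0 y) <= abs_sum3 a /\ norm3 (vsub z1 y) <= abs_sum3 a /\
    norm3 (vsub z2 y) <= abs_sum3 a /\
    f (vadd y a) - f y = Df 0%nat z0 * cf a 0 + Df 1%nat z1 * cf a 1 + Df 2%nat z2 * cf a 2.
Proof.
  intros Hp HV.
  assert (Near : forall s0 s1 s2, Rabs s0 <= Rabs (cf a 0) -> Rabs s1 <= Rabs (cf a 1) ->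
            Rabs s2 <= Rabs (cf a 2) -> norm3 (vsub (vadd y (mk3 s0 s1 s2)) y) <= abs_sum3 a).
  { intros s0 s1 s2 H0 H1 H2.
    replace (vsub (vadd y (mk3 s0 s1 s2)) y) with (mk3 s0 s1 s2) by (vec_ext; ring).
    eapply Rle_trans; [apply norm3_le_abs_sum3|].
    change (abs_sum3 (mk3 s0 s1 s2)) with (Rabs s0 + Rabs s1 + Rabs s2). unfold abs_sum3; lra. }
  set (P1 := line y 2 (cf a 2)). set (P0 := line P1 1 (cf a 1)).
  assert (E0 : forall s, line P0 0 s = vadd y (mk3 s (cf a 1) (cf a 2)))
    by (intros; unfold P0, P1, line; vec_ext; simpl; ring).
  assert (E1 : forall s, line P1 1 s = vadd y (mk3 0 s (cf a 2)))
    by (intros; unfold P1, line; vec_ext; simpl; ring).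
  assert (E2 : forall s, line y 2 s = vadd y (mk3 0 0 s))
    by (intros; unfold line; vec_ext; simpl; ring).
  assert (Hrefl : forall i, Rabs (cf a i) <= Rabs (cf a i)) by (intros; lra).
  assert (Hzero : forall i, Rabs 0 <= Rabs (cf a i)) by (intros; rewrite Rabs_R0; apply Rabs_pos).
  destruct (mvt_line f (Df 0%nat) 0 V P0 (cf a 0) (Hp 0%nat ltac:(lia))) as [c0 [Hc0 T0]].
  { intros s Hs. apply HV. rewrite E0. apply Near; auto. apply Rabs_between_0; auto. }
  destruct (mvt_line f (Df 1%nat) 1 V P1 (cf a 1) (Hp 1%nat ltac:(lia))) as [c1 [Hc1 T1]].
  { intros s Hs. apply HV. rewrite E1. apply Near; auto. apply Rabs_between_0; auto. }
  destruct (mvt_line f (Df 2%nat) 2 V y (cf a 2) (Hp 2%nat ltac:(lia))) as [c2 [Hc2 T2]].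
  { intros s Hs. apply HV. rewrite E2. apply Near; auto. apply Rabs_between_0; auto. }
  exists (line P0 0 c0), (line P1 1 c1), (line y 2 c2).
  rewrite E0, E1, E2. repeat split; try (apply Near; auto).
  assert (Ea : vadd y a = line P0 0 (cf a 0)) by (rewrite E0; vec_ext; simpl; ring).
  fold P1 in T2. fold P0 in T1. rewrite Ea, <- E0, <- E1, <- E2. lra.
Qed.

Lemma directional_derivative U f Df y d : S2open U -> cone U y ->
  (forall k, (k < 3)%nat -> is_partial f k (Df k) (cone U)) ->
  (forall k, (k < 3)%nat -> cont3 (Df k) (cone U)) ->
  derivable_pt_lim (fun t => f (vadd y (vscal t d))) 0 (sum3 (fun k => cf d k * Df k y)).
Proof.
  intros HU Hy Hp Hc eps Heps.
  set (S := abs_sum3 d). pose proof (abs_sum3_ge0 d) as HS; fold S in HS.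
  set (e := eps / (S + 1)).
  assert (He : 0 < e) by (unfold e; apply Rdiv_lt_0_compat; lra).
  destruct (Hc 0%nat ltac:(lia) y Hy e He) as [d0 [Hd0 C0]].
  destruct (Hc 1%nat ltac:(lia) y Hy e He) as [d1 [Hd1 C1]].
  destruct (Hc 2%nat ltac:(lia) y Hy e He) as [d2 [Hd2 C2]].
  destruct (cone_open U y HU Hy) as [dl [Hdl Cl]].
  set (m := Rmin (Rmin dl d0) (Rmin d1 d2)).
  assert (Hm : 0 < m) by (unfold m; repeat apply Rmin_pos; auto).
  assert (Hm1 : m <= dl /\ m <= d0 /\ m <= d1 /\ m <= d2).
  { unfold m. pose proof (Rmin_l (Rmin dl d0) (Rmin d1 d2)); pose proof (Rmin_r (Rmin dl d0) (Rmin d1 d2)).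
    pose proof (Rmin_l dl d0); pose proof (Rmin_r dl d0); pose proof (Rmin_l d1 d2);
    pose proof (Rmin_r d1 d2). lra. }
  assert (Hdel : 0 < m / (S + 1)) by (apply Rdiv_lt_0_compat; lra).
  exists (mkposreal _ Hdel). intros h Hh Hlt. simpl in Hlt.
  assert (Hr : abs_sum3 (vscal h d) < m).
  { rewrite abs_sum3_vscal. fold S.
    apply Rmult_lt_compat_r with (r := S + 1) in Hlt; [|lra].
    unfold Rdiv in Hlt. rewrite Rmult_assoc, Rinv_l, Rmult_1_r in Hlt by lra.
    pose proof (Rabs_pos h). nra. }
  destruct (staircase_mvt f Df (cone U) y (vscal h d) Hp) as [z0 [z1 [z2 [N0 [N1 [N2 Einc]]]]]].
  { intros z Hz. apply Cl. lra. }
  pose proof (C0 z0 (Cl z0 ltac:(lra)) ltac:(lra)) as B0.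
  pose proof (C1 z1 (Cl z1 ltac:(lra)) ltac:(lra)) as B1.
  pose proof (C2 z2 (Cl z2 ltac:(lra)) ltac:(lra)) as B2.
  replace (vadd y (vscal 0 d)) with y by (vec_ext; ring).
  rewrite Rplus_0_l, !cf_vscal in *.
  replace ((f (vadd y (vscal h d)) - f y) / h - sum3 (fun k => cf d k * Df k y))
    with (cf d 0 * (Df 0%nat z0 - Df 0%nat y) + cf d 1 * (Df 1%nat z1 - Df 1%nat y)
          + cf d 2 * (Df 2%nat z2 - Df 2%nat y)) by (rewrite Einc; unfold sum3; field; auto).
  eapply Rle_lt_trans; [apply Rabs_triang|].
  eapply Rle_lt_trans; [apply Rplus_le_compat_r, Rabs_triang|].
  rewrite !Rabs_mult.
  pose proof (Rabs_pos (cf d 0)); pose proof (Rabs_pos (cf d 1)); pose proof (Rabs_pos (cf d 2)).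
  assert (S * e < eps).
  { unfold e. apply Rmult_lt_reg_r with (S + 1); [lra|]. unfold Rdiv.
    replace (S * (eps * / (S + 1)) * (S + 1)) with (S * eps) by (field; lra). nra. }
  unfold S, abs_sum3 in *. nra.
Qed.

Lemma is_partial_eq_on U g G Dg i y L : S2open U -> cone U y -> is_partial g i Dg (cone U) ->
  (forall z, cone U z -> g z = G z) ->
  derivable_pt_lim (fun t => G (line y i t)) 0 L -> Dg y = L.
Proof.
  intros HU Hy Hp E HL. destruct (line_in_cone U y i HU Hy) as [d [Hd Hl]].
  apply (uniqueness_limite (fun t => G (line y i t)) 0); auto.
  apply (d_local (fun t => g (line y i t)) _ _ _ d Hd).
  - intros t Ht. apply E, Hl. rewrite Rminus_0_r in Ht; auto.
  - exact (Hp y Hy).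
Qed.

Lemma derivative_vanishing_on U G y i L : S2open U -> cone U y -> (forall z, cone U z -> G z = 0) ->
  derivable_pt_lim (fun t => G (line y i t)) 0 L -> L = 0.
Proof.
  intros HU Hy HG HL. destruct (line_in_cone U y i HU Hy) as [d [Hd Hl]].
  apply (uniqueness_limite (fun t => G (line y i t)) 0); auto.
  apply (d_local (fun _ => 0) _ _ _ d Hd); [|apply d_const].
  intros t Ht. rewrite HG; auto. apply Hl. rewrite Rminus_0_r in Ht; auto.
Qed.

Lemma second_difference_mvt f Dk Dkl V k l y s : 0 < s ->
  is_partial f k Dk V -> is_partial Dk l Dkl V ->
  (forall a b, 0 <= a <= s -> 0 <= b <= s -> V (line (line y k a) l b)) ->
  exists a b, 0 <= a <= s /\ 0 <= b <= s /\
    f (line (line y k s) l s) - f (line y k s) - f (line y l s) + f y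
    = s * s * Dkl (line (line y k a) l b).
Proof.
  intros Hs Hk Hkl Hv.
  assert (Hmin : Rmin 0 s = 0) by (apply Rmin_left; lra).
  assert (Hmax : Rmax 0 s = s) by (apply Rmax_right; lra).
  destruct (mvt_signed (fun a => f (line (line y l s) k a) - f (line y k a))
              (fun a => Dk (line (line y l s) k a) - Dk (line y k a)) 0 s) as [c [Hc E1]].
  { intros c Hc. rewrite Hmin, Hmax in Hc. apply d_minus.
    - apply (is_partial_line f k Dk V). exact Hk. rewrite <- line_comm. apply Hv; lra.
    - apply (is_partial_line f k Dk V). exact Hk. rewrite <- (line_0 (line y k c) l). apply Hv; lra. }
  rewrite Hmin, Hmax in Hc.
  destruct (mvt_signed (fun b => Dk (line (line y k c) l b)) (fun b => Dkl (line (line y k c) l b)) 0 s)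
    as [b [Hb E2]].
  { intros b Hb. rewrite Hmin, Hmax in Hb. apply (is_partial_line Dk l Dkl V); [auto | apply Hv; lra]. }
  rewrite Hmin, Hmax in Hb.
  exists c, b. split; [lra|]. split; [lra|].
  rewrite (line_0 y k), <- (line_comm y k l c s), <- (line_comm y k l s s), (line_0 (line y l s) k) in E1.
  rewrite (line_0 (line y k c) l) in E2. rewrite E2 in E1.
  transitivity (Dkl (line (line y k c) l b) * (s - 0) * (s - 0)); [lra|ring].
Qed.

Lemma schwarz U f Dk Dl Dkl Dlk k l y : S2open U -> cone U y ->
  is_partial f k Dk (cone U) -> is_partial f l Dl (cone U) ->
  is_partial Dk l Dkl (cone U) -> is_partial Dl k Dlk (cone U) ->
  cont3 Dkl (cone U) -> cont3 Dlk (cone U) -> Dkl y = Dlk y.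
Proof.
  intros HU Hy Hk Hl Hkl Hlk C1 C2.
  destruct (Req_dec (Dkl y) (Dlk y)) as [E|NE]; auto. exfalso.
  set (eps := Rabs (Dkl y - Dlk y) / 2).
  assert (He : 0 < eps) by (unfold eps; apply Rdiv_lt_0_compat; [apply Rabs_pos_lt; lra|lra]).
  destruct (C1 y Hy eps He) as [d1 [Hd1 B1]]. destruct (C2 y Hy eps He) as [d2 [Hd2 B2]].
  destruct (cone_open U y HU Hy) as [d0 [Hd0 B0]].
  set (m := Rmin d0 (Rmin d1 d2)).
  assert (Hm : 0 < m) by (unfold m; repeat apply Rmin_pos; auto).
  assert (Hm1 : m <= d0 /\ m <= d1 /\ m <= d2).
  { unfold m. pose proof (Rmin_l d0 (Rmin d1 d2)); pose proof (Rmin_r d0 (Rmin d1 d2)).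
    pose proof (Rmin_l d1 d2); pose proof (Rmin_r d1 d2). lra. }
  set (s := m / 4). assert (Hs : 0 < s) by (unfold s; lra).
  assert (Near : forall k l a b, 0 <= a <= s -> 0 <= b <= s ->
            norm3 (vsub (line (line y k a) l b) y) < m).
  { intros k' l' a b Ha Hb. eapply Rle_lt_trans; [apply norm3_line_line|].
    rewrite !Rabs_pos_eq by lra. unfold s in *. lra. }
  destruct (second_difference_mvt f Dk Dkl (cone U) k l y s Hs Hk Hkl) as [a [b [Ha [Hb E1]]]].
  { intros a b Ha Hb. apply B0. pose proof (Near k l a b Ha Hb). lra. }
  destruct (second_difference_mvt f Dl Dlk (cone U) l k y s Hs Hl Hlk) as [a' [b' [Ha' [Hb' E2]]]].
  { intros a' b' Ha' Hb'. apply B0. pose proof (Near l k a' b' Ha' Hb'). lra. }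
  rewrite (line_comm y l k s s) in E2.
  assert (EQ : Dkl (line (line y k a) l b) = Dlk (line (line y l a') k b')).
  { apply (Rmult_eq_reg_l (s * s)); [lra | intro; nra]. }
  pose proof (Near k l a b Ha Hb); pose proof (Near l k a' b' Ha' Hb').
  pose proof (B1 (line (line y k a) l b) (B0 (line (line y k a) l b) ltac:(lra)) ltac:(lra)).
  pose proof (B2 (line (line y l a') k b') (B0 (line (line y l a') k b') ltac:(lra)) ltac:(lra)).
  rewrite EQ in H1.
  assert (Rabs (Dkl y - Dlk y) < 2 * eps).
  { replace (Dkl y - Dlk y) with ((Dlk (line (line y l a') k b') - Dlk y)
                                  - (Dlk (line (line y l a') k b') - Dkl y)) by ring.
    eapply Rle_lt_trans; [apply Rabs_triang|]. rewrite Rabs_Ropp. lra. }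
  unfold eps in H3. lra.
Qed.

(* [f] is positively homogeneous of degree [-m] on the cone over [U]. *)
Definition homogeneous_on (U : R3 -> Prop) (m : nat) (f : R3 -> R) : Prop :=
  forall y s, cone U y -> 0 < s -> f (vscal s y) * s ^ m = f y.

Lemma is_partial_homogeneous U f Df i m : S2open U ->
  homogeneous_on U m f -> is_partial f i Df (cone U) -> homogeneous_on U (S m) Df.
Proof.
  intros HU Hh Hp y s Hy Hs.
  assert (Hsy : cone U (vscal s y)) by (apply cone_vscal; auto).
  assert (L1 : derivable_pt_lim (fun t => f (line (vscal s y) i t) * s ^ m) 0 (Df (vscal s y) * s ^ m)).
  { apply (d_eq _ _ (Df (vscal s y) * s ^ m + f (line (vscal s y) i 0) * 0)); [|ring].
    apply d_mult; [|apply d_const]. apply (Hp _ Hsy). }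
  assert (L2 : derivable_pt_lim (fun t => f (line y i (/ s * t))) 0 (Df y * / s)).
  { apply (d_scale (fun tau => f (line y i tau)) 0 (/ s) (Df y)). rewrite Rmult_0_r.
    replace (Df y) with (Df (line y i 0)) by (rewrite line_0; auto).
    apply (is_partial_line f i Df (cone U)); [auto | rewrite line_0; auto]. }
  destruct (line_in_cone U y i HU Hy) as [d [Hd Hl]].
  assert (L3 : derivable_pt_lim (fun t => f (line (vscal s y) i t) * s ^ m) 0 (Df y * / s)).
  { apply (d_local (fun t => f (line y i (/ s * t))) _ _ _ (d * s)); [nra| |exact L2].
    intros t Ht. rewrite Rminus_0_r in Ht.
    assert (Ep : line (vscal s y) i t = vscal s (line y i (/ s * t)))
      by (unfold line; vec_ext; field; lra).
    rewrite Ep, Hh; auto. apply Hl. rewrite Rabs_mult, Rabs_inv, (Rabs_pos_eq s) by lra.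
    apply Rmult_lt_reg_l with s; [lra|]. field_simplify; lra. }
  pose proof (uniqueness_limite _ _ _ _ L1 L3) as E.
  simpl. replace (Df (vscal s y) * (s * s ^ m)) with ((Df (vscal s y) * s ^ m) * s) by ring.
  rewrite E. field. lra.
Qed.

Lemma euler_homogeneous U f Df m y : S2open U -> cone U y -> homogeneous_on U m f ->
  (forall k, (k < 3)%nat -> is_partial f k (Df k) (cone U)) ->
  (forall k, (k < 3)%nat -> cont3 (Df k) (cone U)) ->
  sum3 (fun k => cf y k * Df k y) = - INR m * f y.
Proof.
  intros HU Hy Hh Hp Hc.
  pose proof (directional_derivative U f Df y y HU Hy Hp Hc) as D1.
  assert (D2 : derivable_pt_lim (fun t => (1 + t) ^ m) 0 (INR m)).
  { assert (H : derivable_pt_lim (fun t => 1 + t) 0 1)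
      by (apply (d_eq _ _ (0 + 1)); [apply d_plus; [apply d_const|apply d_id]|ring]).
    apply (d_eq _ _ _ _ (derivable_pt_lim_comp (fun t => 1 + t) (fun z => z ^ m) 0 1 _ H
                                                 (derivable_pt_lim_pow _ m))).
    rewrite Rplus_0_r, pow1. ring. }
  pose proof (d_mult _ _ _ _ _ D1 D2) as D3.
  assert (D4 : derivable_pt_lim (fun t => f (vadd y (vscal t y)) * (1 + t) ^ m) 0 0).
  { apply (d_local (fun _ => f y) _ _ _ (1 / 2)); [lra| |apply d_const].
    intros t Ht. rewrite Rminus_0_r in Ht. apply Rabs_def2 in Ht.
    replace (vadd y (vscal t y)) with (vscal (1 + t) y) by (vec_ext; ring).
    rewrite Hh; auto; lra. }
  pose proof (uniqueness_limite _ _ _ _ D3 D4) as E. cbv beta in E.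
  replace (vadd y (vscal 0 y)) with y in E by (vec_ext; ring).
  rewrite Rplus_0_r, pow1 in E. lra.
Qed.

Definition cross (x q : R3) : R3 :=
  mk3 (cf x 1 * cf q 2 - cf x 2 * cf q 1) (cf x 2 * cf q 0 - cf x 0 * cf q 2)
      (cf x 0 * cf q 1 - cf x 1 * cf q 0).

Definition delta (i j : nat) : R := if Nat.eqb i j then 1 else 0.

Definition quad3 (F : nat -> nat -> R) (u v : R3) : R :=
  sum3 (fun a => sum3 (fun b => F a b * cf u a * cf v b)).

Definition mat_vec (w : nat -> nat -> R) (v : R3) : R3 :=
  mk3 (sum3 (fun b => w 0%nat b * cf v b)) (sum3 (fun b => w 1%nat b * cf v b))
      (sum3 (fun b => w 2%nat b * cf v b)).

Definition frame_form (q r : R3) (A B D : R) (a b : nat) : R :=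
  A * cf q a * cf q b + B * (cf q a * cf r b + cf r a * cf q b) + D * cf r a * cf r b.

Ltac dest3 i := destruct i as [|[|[|i]]]; [| | |lia].

Lemma sum3_zero f : (forall i, (i < 3)%nat -> f i = 0) -> sum3 f = 0.
Proof. intros H. unfold sum3. rewrite !H by lia. ring. Qed.

Lemma sum3_abs_le f M : (forall i, (i < 3)%nat -> Rabs (f i) <= M) -> Rabs (sum3 f) <= 3 * M.
Proof.
  intros H. unfold sum3.
  pose proof (H 0%nat ltac:(lia)); pose proof (H 1%nat ltac:(lia)); pose proof (H 2%nat ltac:(lia)).
  eapply Rle_trans; [apply Rabs_triang|].
  eapply Rle_trans; [apply Rplus_le_compat_r, Rabs_triang|]. lra.
Qed.

Lemma abs_cf_le_1 v i : dot v v = 1 -> Rabs (cf v i) <= 1.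
Proof. intros H. eapply Rle_trans; [apply abs_cf_le_norm3|]. unfold norm3. rewrite H, sqrt_1. lra. Qed.

Lemma dot_cross_l x q : dot (cross x q) x = 0.
Proof. unfold cross, dot, sum3, mk3; cbn [cf fst snd]; ring. Qed.

Lemma dot_cross_r x q : dot (cross x q) q = 0.
Proof. unfold cross, dot, sum3, mk3; cbn [cf fst snd]; ring. Qed.

Lemma dot_cross_self x q : dot x x = 1 -> dot q q = 1 -> dot x q = 0 -> dot (cross x q) (cross x q) = 1.
Proof.
  intros Hx Hq Hxq.
  transitivity (dot x x * dot q q - dot x q * dot x q).
  - unfold cross, dot, sum3, mk3; cbn [cf fst snd]. ring.
  - rewrite Hx, Hq, Hxq; ring.
Qed.

Lemma frame_completeness x q : dot x x = 1 -> dot q q = 1 -> dot x q = 0 ->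
  forall i j, (i < 3)%nat -> (j < 3)%nat ->
  cf q i * cf q j + cf (cross x q) i * cf (cross x q) j + cf x i * cf x j = delta i j.
Proof.
  intros H1 H2 H3 i j Hi Hj.
  destruct x as [[x0 x1] x2]; destruct q as [[q0 q1] q2].
  unfold dot, sum3, cross, mk3 in *; cbn [cf fst snd] in *.
  dest3 i; dest3 j; unfold delta; cbn [Nat.eqb cf fst snd];
  match goal with |- ?qi * ?qj + _ + ?xi * ?xj = ?dv =>
  transitivity (dv * ((x0*x0+x1*x1+x2*x2) * (q0*q0+q1*q1+q2*q2) - (x0*q0+x1*q1+x2*q2) * (x0*q0+x1*q1+x2*q2))
    - (q0*q0+q1*q1+q2*q2) * xi * xj - (x0*x0+x1*x1+x2*x2) * qi * qj + (x0*q0+x1*q1+x2*q2) * (xi*qj+xj*qi)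
    + qi * qj + xi * xj); [ring | rewrite H1, H2, H3; ring] end.
Qed.

Lemma tangent_tensor_frame x q (w : nat -> nat -> R) : dot x x = 1 -> dot q q = 1 -> dot x q = 0 ->
  (forall a b, (a < 3)%nat -> (b < 3)%nat -> w a b = w b a) ->
  (forall a, (a < 3)%nat -> sum3 (fun b => w a b * cf x b) = 0) ->
  forall a b, (a < 3)%nat -> (b < 3)%nat ->
  w a b = frame_form q (cross x q) (quad3 w q q) (quad3 w (cross x q) q)
            (quad3 w (cross x q) (cross x q)) a b.
Proof.
  intros H1 H2 H3 Hs Hwx a b Ha Hb. unfold frame_form.
  set (r := cross x q).
  set (P := fun i j => cf q i * cf q j + cf r i * cf r j + cf x i * cf x j).
  assert (HP : forall i j, (i < 3)%nat -> (j < 3)%nat -> P i j = delta i j)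
    by (intros; apply frame_completeness; auto).
  assert (E1 : w a b = sum3 (fun c => P a c * sum3 (fun d => w c d * P d b))).
  { unfold sum3. rewrite !HP by lia. dest3 a; dest3 b; unfold delta; cbn [Nat.eqb]; ring. }
  rewrite E1. clear E1 HP.
  pose proof (Hwx 0%nat ltac:(lia)) as W0; pose proof (Hwx 1%nat ltac:(lia)) as W1;
  pose proof (Hwx 2%nat ltac:(lia)) as W2.
  set (Q := fun i j => cf q i * cf q j + cf r i * cf r j).
  transitivity (quad3 w q q * cf q a * cf q b
        + quad3 w r q * (cf q a * cf r b + cf r a * cf q b)
        + quad3 w r r * cf r a * cf r b
        + (Q a 0%nat * sum3 (fun d => w 0%nat d * cf x d) + Q a 1%nat * sum3 (fun d => w 1%nat d * cf x d)
           + Q a 2%nat * sum3 (fun d => w 2%nat d * cf x d)) * cf x b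
        + cf x a * (sum3 (fun d => w 0%nat d * cf x d) * Q 0%nat b
                    + sum3 (fun d => w 1%nat d * cf x d) * Q 1%nat b
           + sum3 (fun d => w 2%nat d * cf x d) * Q 2%nat b)
        + cf x a * cf x b * (cf x 0 * sum3 (fun d => w 0%nat d * cf x d)
                             + cf x 1 * sum3 (fun d => w 1%nat d * cf x d)
           + cf x 2 * sum3 (fun d => w 2%nat d * cf x d))).
  2: { rewrite W0, W1, W2. ring. }
  unfold P, Q, quad3, sum3.
  rewrite (Hs 1%nat 0%nat), (Hs 2%nat 0%nat), (Hs 2%nat 1%nat) by lia. ring.
Qed.

Lemma elliptic_frame_bounds lam Lam x q r (F : nat -> nat -> R) : 0 < lam ->
  (forall a b, (a < 3)%nat -> (b < 3)%nat -> F a b = F b a) ->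
  (forall xi, dot xi x = 0 -> lam * dot xi xi <= quad3 F xi xi <= Lam * dot xi xi) ->
  dot q x = 0 -> dot r x = 0 -> dot q q = 1 -> dot r r = 1 -> dot r q = 0 ->
  lam <= quad3 F q q <= Lam /\ lam <= quad3 F r r <= Lam /\ Rabs (quad3 F q r) <= Lam.
Proof.
  intros Hl HFs Hell Hqx Hrx Hqq Hrr Hrq.
  pose proof (Hell q Hqx) as Eq. pose proof (Hell r Hrx) as Er.
  rewrite Hqq in Eq. rewrite Hrr in Er.
  assert (Hp : dot (vadd q r) x = 0)
    by (transitivity (dot q x + dot r x);
        [unfold dot, sum3; rewrite !cf_vadd; ring | rewrite Hqx, Hrx; ring]).
  assert (Hm : dot (vsub q r) x = 0)
    by (transitivity (dot q x - dot r x);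
        [unfold dot, sum3; rewrite !cf_vsub; ring | rewrite Hqx, Hrx; ring]).
  pose proof (Hell _ Hp) as Ep. pose proof (Hell _ Hm) as Em.
  assert (Ep1 : dot (vadd q r) (vadd q r) = dot q q + 2 * dot r q + dot r r)
    by (unfold dot, sum3; rewrite !cf_vadd; ring).
  assert (Em1 : dot (vsub q r) (vsub q r) = dot q q - 2 * dot r q + dot r r)
    by (unfold dot, sum3; rewrite !cf_vsub; ring).
  assert (Ep2 : quad3 F (vadd q r) (vadd q r) = quad3 F q q + 2 * quad3 F q r + quad3 F r r).
  { unfold quad3, sum3; rewrite !cf_vadd.
    rewrite (HFs 1%nat 0%nat), (HFs 2%nat 0%nat), (HFs 2%nat 1%nat) by lia. ring. }
  assert (Em2 : quad3 F (vsub q r) (vsub q r) = quad3 F q q - 2 * quad3 F q r + quad3 F r r).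
  { unfold quad3, sum3; rewrite !cf_vsub.
    rewrite (HFs 1%nat 0%nat), (HFs 2%nat 0%nat), (HFs 2%nat 1%nat) by lia. ring. }
  rewrite Ep1, Ep2, Hqq, Hrq, Hrr in Ep. rewrite Em1, Em2, Hqq, Hrq, Hrr in Em.
  repeat split; try lra. apply Rabs_le; lra.
Qed.

Lemma traceless_coeff_bound lam Lam f11 f12 f22 A B D s : 0 < lam ->
  0 <= f11 <= Lam -> lam <= f22 -> Rabs f12 <= Lam ->
  A * f11 + 2 * B * f12 + D * f22 = 0 -> Rabs A <= s -> Rabs B <= s ->
  Rabs D <= 3 * Lam * s / lam.
Proof.
  intros Hl H11 H22 H12 Htr HA HB.
  assert (Rabs D * f22 <= 3 * Lam * s).
  { replace (Rabs D * f22) with (Rabs (A * f11 + 2 * B * f12))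
      by (replace (A * f11 + 2 * B * f12) with (- (D * f22)) by lra;
          rewrite Rabs_Ropp, Rabs_mult, (Rabs_pos_eq f22) by lra; ring).
    eapply Rle_trans; [apply Rabs_triang|].
    rewrite !Rabs_mult, (Rabs_pos_eq f11), (Rabs_pos_eq 2) by lra.
    pose proof (Rabs_pos A); pose proof (Rabs_pos B); pose proof (Rabs_pos f12). nra. }
  pose proof (Rabs_pos D).
  apply (Rmult_le_reg_r lam); [lra|]. unfold Rdiv. rewrite Rmult_assoc, Rinv_l, Rmult_1_r by lra. nra.
Qed.

Lemma abs_frame_form_le q r A B D a b : dot q q = 1 -> dot r r = 1 ->
  Rabs (frame_form q r A B D a b) <= Rabs A + 2 * Rabs B + Rabs D.
Proof.
  intros Hq Hr. unfold frame_form.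
  pose proof (abs_cf_le_1 q a Hq); pose proof (abs_cf_le_1 q b Hq);
  pose proof (abs_cf_le_1 r a Hr); pose proof (abs_cf_le_1 r b Hr).
  assert (Hprod : forall c u v, Rabs u <= 1 -> Rabs v <= 1 -> Rabs (c * u * v) <= Rabs c).
  { intros c u v Hu Hv. rewrite !Rabs_mult. pose proof (Rabs_pos c); pose proof (Rabs_pos u);
    pose proof (Rabs_pos v). assert (Rabs u * Rabs v <= 1) by nra. nra. }
  eapply Rle_trans; [apply Rabs_triang|]. eapply Rle_trans; [apply Rplus_le_compat_r, Rabs_triang|].
  pose proof (Hprod A _ _ H H0). pose proof (Hprod D _ _ H1 H2).
  assert (Rabs (B * (cf q a * cf r b + cf r a * cf q b)) <= 2 * Rabs B).
  { rewrite Rmult_plus_distr_l. eapply Rle_trans; [apply Rabs_triang|].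
    rewrite <- !Rmult_assoc. pose proof (Hprod B _ _ H H2). pose proof (Hprod B _ _ H1 H0). lra. }
  lra.
Qed.

Lemma mcontr_frame_form F q r A B D :
  (forall a b, (a < 3)%nat -> (b < 3)%nat -> F a b = F b a) ->
  sum3 (fun a => sum3 (fun b => F a b * frame_form q r A B D a b))
  = A * quad3 F q q + 2 * B * quad3 F q r + D * quad3 F r r.
Proof.
  intros HFs. unfold frame_form, quad3, sum3.
  rewrite (HFs 1%nat 0%nat), (HFs 2%nat 0%nat), (HFs 2%nat 1%nat) by lia. ring.
Qed.

Lemma norm3_mat_vec_frame_form q r A B D n v : dot q q = 1 -> dot r r = 1 -> dot r q = 0 -> 0 <= n ->
  (forall i, cf v i = n * cf q i) ->
  norm3 (mat_vec (frame_form q r A B D) v) = n * sqrt (A * A + B * B).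
Proof.
  intros Hqq Hrr Hrq Hn Hvq.
  replace (mat_vec (frame_form q r A B D) v) with (vscal n (vadd (vscal A q) (vscal B r))).
  - rewrite norm3_vscal, Rabs_pos_eq by lra. f_equal. unfold norm3. f_equal.
    transitivity (A * A * dot q q + 2 * A * B * dot r q + B * B * dot r r);
      [unfold dot, sum3; repeat rewrite ?cf_vadd, ?cf_vscal; ring | rewrite Hqq, Hrq, Hrr; ring].
  - assert (Ew : forall i, sum3 (fun b => frame_form q r A B D i b * cf v b)
                           = n * (A * cf q i + B * cf r i)).
    { intros i. transitivity (n * (A * cf q i * dot q q + B * (cf q i * dot r q + cf r i * dot q q)
                                   + D * cf r i * dot r q)).
      - unfold frame_form, dot, sum3. rewrite !Hvq. ring.
      - rewrite Hqq, Hrq; ring. }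
    unfold mat_vec. rewrite !Ew. vec_ext; simpl; ring.
Qed.

Lemma Rabs_le_sqrt_sum_sqr A B : Rabs A <= sqrt (A * A + B * B).
Proof.
  apply Rsqr_incr_0_var; [|apply sqrt_pos]. unfold Rsqr.
  rewrite sqrt_sqrt by nra. rewrite <- Rabs_mult, Rabs_pos_eq by nra. nra.
Qed.

Definition estimate_const (lam Lam K : R) : R := 27 * K * (3 + 3 * Lam / lam).

Lemma normalize_tangent x v : v <> mk3 0 0 0 -> dot x v = 0 ->
  dot (vscal (/ norm3 v) v) (vscal (/ norm3 v) v) = 1 /\ dot x (vscal (/ norm3 v) v) = 0 /\
  (forall i, cf v i = norm3 v * cf (vscal (/ norm3 v) v) i).
Proof.
  intros Hv Hxv. pose proof (norm3_pos v Hv) as Hn.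
  split; [|split].
  - rewrite <- norm3_sqr, norm3_normalize by auto. ring.
  - transitivity (/ norm3 v * dot x v); [unfold dot, sum3; rewrite !cf_vscal; ring | rewrite Hxv; ring].
  - intros i. rewrite cf_vscal. field. lra.
Qed.

Lemma abs_dir_contr_entry_le v (w : nat -> nat -> R) (D : nat -> nat -> nat -> R) K M :
  (forall a b j, (a < 3)%nat -> (b < 3)%nat -> (j < 3)%nat -> Rabs (D a b j) <= K) ->
  (forall a b, (a < 3)%nat -> (b < 3)%nat -> Rabs (w a b) <= M) ->
  Rabs (sum3 (fun j => cf v j * sum3 (fun a => sum3 (fun b => D a b j * w a b))))
  <= 27 * norm3 v * K * M.
Proof.
  intros HD Hw.
  replace (27 * norm3 v * K * M) with (3 * (norm3 v * (3 * (3 * (K * M))))) by ring.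
  apply sum3_abs_le. intros j Hj. rewrite Rabs_mult.
  apply Rmult_le_compat; [apply Rabs_pos | apply Rabs_pos | apply abs_cf_le_norm3 |].
  apply sum3_abs_le. intros a Ha. apply sum3_abs_le. intros b Hb. rewrite Rabs_mult.
  apply Rmult_le_compat; [apply Rabs_pos | apply Rabs_pos | apply HD; auto | apply Hw; auto].
Qed.

Lemma abs_dir_contr_le lam Lam K x v (w F : nat -> nat -> R) (D : nat -> nat -> nat -> R) :
  0 < lam -> lam <= Lam -> dot x x = 1 -> dot x v = 0 ->
  (forall a b, (a < 3)%nat -> (b < 3)%nat -> w a b = w b a) ->
  (forall a, (a < 3)%nat -> sum3 (fun b => w a b * cf x b) = 0) ->
  (forall a b, (a < 3)%nat -> (b < 3)%nat -> F a b = F b a) ->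
  (forall xi, dot xi x = 0 -> lam * dot xi xi <= quad3 F xi xi <= Lam * dot xi xi) ->
  sum3 (fun a => sum3 (fun b => F a b * w a b)) = 0 ->
  (forall a b j, (a < 3)%nat -> (b < 3)%nat -> (j < 3)%nat -> Rabs (D a b j) <= K) ->
  Rabs (sum3 (fun j => cf v j * sum3 (fun a => sum3 (fun b => D a b j * w a b))))
  <= estimate_const lam Lam K * norm3 (mat_vec w v).
Proof.
  intros Hl HL Hx Hxv Hws Hwx HFs Hell Htr HD. unfold estimate_const.
  assert (HK : 0 <= K) by (pose proof (HD 0%nat 0%nat 0%nat ltac:(lia) ltac:(lia) ltac:(lia));
                          pose proof (Rabs_pos (D 0%nat 0%nat 0%nat)); lra).
  assert (HC0 : 0 <= 3 + 3 * Lam / lam)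
    by (assert (0 <= Lam / lam)
          by (unfold Rdiv; apply Rmult_le_pos; [lra | left; apply Rinv_0_lt_compat; lra]); lra).
  set (C0 := 3 + 3 * Lam / lam) in *.
  pose proof (norm3_ge0 (mat_vec w v)).
  destruct (Req_dec (norm3 v) 0) as [Hn|Hn].
  { assert (Hv0 : forall i, cf v i = 0).
    { intros i. pose proof (abs_cf_le_norm3 v i) as Hi. rewrite Hn in Hi. apply Rabs_le_inv in Hi. lra. }
    replace (sum3 _) with 0 by (unfold sum3; rewrite !Hv0; ring).
    rewrite Rabs_R0. apply Rmult_le_pos; [apply Rmult_le_pos|]; lra. }
  assert (Hv0 : v <> mk3 0 0 0) by (intro E; apply Hn; rewrite E; apply norm3_zero).
  destruct (normalize_tangent x v Hv0 Hxv) as [Hqq [Hxq Hvq]].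
  set (n := norm3 v) in *. set (q := vscal (/ n) v) in *. pose proof (norm3_ge0 v) as Hn0. fold n in Hn0.
  assert (Hqx : dot q x = 0) by (rewrite <- Hxq; unfold dot, sum3; ring).
  set (r := cross x q).
  pose proof (dot_cross_self x q Hx Hqq Hxq) as Hrr. pose proof (dot_cross_l x q) as Hrx.
  pose proof (dot_cross_r x q) as Hrq. fold r in Hrr, Hrx, Hrq.
  pose proof (tangent_tensor_frame x q w Hx Hqq Hxq Hws Hwx) as Dc. fold r in Dc.
  set (A := quad3 w q q) in *. set (B := quad3 w r q) in *. set (Dd := quad3 w r r) in *.
  set (s := sqrt (A * A + B * B)).
  pose proof (Rabs_le_sqrt_sum_sqr A B) as HA. pose proof (Rabs_le_sqrt_sum_sqr B A) as HB.
  rewrite Rplus_comm in HB. fold s in HA, HB.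
  assert (Hmv : norm3 (mat_vec w v) = n * s).
  { transitivity (norm3 (mat_vec (frame_form q r A B Dd) v)).
    - unfold mat_vec, sum3. rewrite !Dc by lia. reflexivity.
    - apply norm3_mat_vec_frame_form; auto. }
  destruct (elliptic_frame_bounds lam Lam x q r F Hl HFs Hell Hqx Hrx Hqq Hrr Hrq)
    as [[E11a E11b] [[E22a E22b] E12]].
  assert (Htr2 : A * quad3 F q q + 2 * B * quad3 F q r + Dd * quad3 F r r = 0).
  { rewrite <- Htr, <- (mcontr_frame_form F q r A B Dd HFs).
    unfold sum3. rewrite !Dc by lia. reflexivity. }
  pose proof (traceless_coeff_bound lam Lam (quad3 F q q) (quad3 F q r) (quad3 F r r) A B Dd s Hl
                ltac:(lra) E22a E12 Htr2 HA HB) as HDd.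
  assert (Hw : forall a b, (a < 3)%nat -> (b < 3)%nat -> Rabs (w a b) <= C0 * s).
  { intros a b Ha Hb. rewrite (Dc a b Ha Hb).
    eapply Rle_trans; [apply abs_frame_form_le; auto|].
    unfold C0. replace ((3 + 3 * Lam / lam) * s) with (3 * s + 3 * Lam * s / lam) by (field; lra). lra. }
  pose proof (abs_dir_contr_entry_le v w D K (C0 * s) HD Hw) as HT. fold n in HT.
  rewrite Hmv. nra.
Qed.

Lemma quad_rows_nonneg lam Lam x (w F : nat -> nat -> R) : 0 < lam ->
  (forall a, (a < 3)%nat -> sum3 (fun b => w a b * cf x b) = 0) ->
  (forall xi, dot xi x = 0 -> lam * dot xi xi <= quad3 F xi xi <= Lam * dot xi xi) ->
  0 <= sum3 (fun j => sum3 (fun a => sum3 (fun b => F a b * w j a * w j b))).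
Proof.
  intros Hl Hwx Hell.
  assert (Hrow : forall j, (j < 3)%nat -> 0 <= sum3 (fun a => sum3 (fun b => F a b * w j a * w j b))).
  { intros j Hj. set (xi := mk3 (w j 0%nat) (w j 1%nat) (w j 2%nat)).
    assert (Hxi : dot xi x = 0) by (rewrite <- (Hwx j Hj); unfold xi, dot, sum3, mk3; cbn [cf fst snd]; ring).
    destruct (Hell xi Hxi) as [Hq _].
    change (sum3 (fun a => sum3 (fun b => F a b * w j a * w j b))) with (quad3 F xi xi).
    pose proof (dot_self_ge0 xi). nra. }
  unfold sum3 at 1.
  pose proof (Hrow 0%nat ltac:(lia)); pose proof (Hrow 1%nat ltac:(lia));
  pose proof (Hrow 2%nat ltac:(lia)). lra.
Qed.

(* Ambient form at x ∈ S² of the tangential tensor u_ij + u δ_ij, in terms of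
   the ambient derivatives p = Du(x), H = D²u(x) of the 0-homogeneous extension. *)
Definition wtensor (x : R3) (p : nat -> R) (H : nat -> nat -> R) (u : R) (a b : nat) : R :=
  H a b + cf x a * p b + p a * cf x b + u * (delta a b - cf x a * cf x b).

Definition mcontr (F H : nat -> nat -> R) : R := sum3 (fun a => sum3 (fun b => F a b * H a b)).

Definition trace3 (F : nat -> nat -> R) : R := sum3 (fun a => F a a).

Definition F_dot_x (x : R3) (F : nat -> nat -> R) (a : nat) : R := sum3 (fun b => F a b * cf x b).

Definition euler_Du (x : R3) (p : nat -> R) (H : nat -> nat -> R) (b : nat) : R :=
  sum3 (fun k => cf x k * H b k) + p b.

Definition DF_dot_x (x : R3) (F : nat -> nat -> R) (D : nat -> nat -> nat -> R) (b j : nat) : R :=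
  sum3 (fun a => D b a j * cf x a) + F b j.

(* Derivative in direction c of |y|² F^{ab} u_ab + u tr F, the 0-homogeneous
   extension of the equation. *)
Definition pde_deriv (x : R3) (p : nat -> R) (H : nat -> nat -> R) (T : nat -> nat -> nat -> R)
  (F : nat -> nat -> R) (D : nat -> nat -> nat -> R) (u : R) (c : nat) : R :=
  2 * cf x c * mcontr F H + sum3 (fun a => sum3 (fun b => D a b c * H a b + F a b * T a b c))
  + p c * trace3 F + u * sum3 (fun a => D a a c).

Definition hess_rho (x : R3) (p : nat -> R) (H : nat -> nat -> R) (T : nat -> nat -> nat -> R)
  (u : R) (i k : nat) : R :=
  2 * sum3 (fun j => cf (ebase k) j * cf (ebase i) j) * sum3 (fun j => p j * p j)
  + 2 * sum3 (fun j => cf x j * cf (ebase i) j) * (2 * sum3 (fun j => p j * H j k))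
  + 2 * sum3 (fun j => cf x j * cf (ebase k) j) * (2 * sum3 (fun j => p j * H j i))
  + dot x x * (2 * sum3 (fun j => H j k * H j i + p j * T j i k))
  + 2 * (p k * p i + u * H i k).

Definition hess_phi (x : R3) (p : nat -> R) (H : nat -> nat -> R) (T : nat -> nat -> nat -> R)
  (u : R) (E : R3) (i k : nat) : R :=
  let zi := sum3 (fun j => cf x j * cf (ebase i) j) in
  let zk := sum3 (fun j => cf x j * cf (ebase k) j) in
  let dik := sum3 (fun j => cf (ebase k) j * cf (ebase i) j) in
  let Ei := sum3 (fun j => cf E j * cf (ebase i) j) in
  let Ek := sum3 (fun j => cf E j * cf (ebase k) j) in
  let Ep := sum3 (fun j => cf E j * p j) in
  let Ez := sum3 (fun j => cf E j * cf x j) in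
  let EHi := sum3 (fun j => cf E j * H j i) in
  let EHk := sum3 (fun j => cf E j * H j k) in
  let TE := sum3 (fun j => cf E j * T j i k) in
  (dik - zi * zk) * Ep + zi * EHk + zk * EHi + TE
  + H i k * Ez + p i * Ek - p i * Ez * zk + p k * (Ei - Ez * zi)
  + u * (- Ei * zk - Ek * zi - Ez * dik + 3 * Ez * zi * zk).

Ltac sort_indices HH HF HD T1 T2 :=
  rewrite ?(HH 1%nat 0%nat), ?(HH 2%nat 0%nat), ?(HH 2%nat 1%nat),
          ?(HF 1%nat 0%nat), ?(HF 2%nat 0%nat), ?(HF 2%nat 1%nat),
          ?(HD 1%nat 0%nat 0%nat), ?(HD 2%nat 0%nat 0%nat), ?(HD 2%nat 1%nat 0%nat),
          ?(HD 1%nat 0%nat 1%nat), ?(HD 2%nat 0%nat 1%nat), ?(HD 2%nat 1%nat 1%nat),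
          ?(HD 1%nat 0%nat 2%nat), ?(HD 2%nat 0%nat 2%nat), ?(HD 2%nat 1%nat 2%nat) by lia;
  do 3 rewrite ?(T2 1%nat 0%nat 0%nat), ?(T2 2%nat 0%nat 0%nat), ?(T2 2%nat 1%nat 0%nat),
                ?(T2 1%nat 0%nat 1%nat), ?(T2 2%nat 0%nat 1%nat), ?(T2 2%nat 1%nat 1%nat),
                ?(T2 1%nat 0%nat 2%nat), ?(T2 2%nat 0%nat 2%nat), ?(T2 2%nat 1%nat 2%nat),
                ?(T1 0%nat 1%nat 0%nat), ?(T1 0%nat 2%nat 0%nat), ?(T1 0%nat 2%nat 1%nat),
                ?(T1 1%nat 1%nat 0%nat), ?(T1 1%nat 2%nat 0%nat), ?(T1 1%nat 2%nat 1%nat),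
                ?(T1 2%nat 1%nat 0%nat), ?(T1 2%nat 2%nat 0%nat), ?(T1 2%nat 2%nat 1%nat) by lia.

Section PointwiseIdentities.
Variables (x : R3) (p : nat -> R) (H F : nat -> nat -> R) (T D : nat -> nat -> nat -> R) (u : R).
Hypothesis H_sym : forall i j, (i < 3)%nat -> (j < 3)%nat -> H i j = H j i.
Hypothesis F_sym : forall i j, (i < 3)%nat -> (j < 3)%nat -> F i j = F j i.
Hypothesis D_sym : forall a b c, (a < 3)%nat -> (b < 3)%nat -> (c < 3)%nat -> D a b c = D b a c.
Hypothesis T_sym23 : forall i j k, (i < 3)%nat -> (j < 3)%nat -> (k < 3)%nat -> T i j k = T i k j.
Hypothesis T_sym12 : forall i j k, (i < 3)%nat -> (j < 3)%nat -> (k < 3)%nat -> T i j k = T j i k.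
Hypothesis F_tangent : forall a, (a < 3)%nat -> F_dot_x x F a = 0.
Hypothesis DF_tangent : forall b j, (b < 3)%nat -> (j < 3)%nat -> DF_dot_x x F D b j = 0.
Hypothesis pde : mcontr F H + u * trace3 F = 0.
Hypothesis pde_diff : forall c, (c < 3)%nat -> pde_deriv x p H T F D u c = 0.

Lemma contr_hess_rho_eq :
  dot x x = 1 -> sum3 (fun k => cf x k * p k) = 0 ->
  (forall b, (b < 3)%nat -> euler_Du x p H b = 0) ->
  sum3 (fun i => sum3 (fun k => F i k * hess_rho x p H T u i k)) =
  2 * sum3 (fun j => sum3 (fun a => sum3 (fun b => F a b * wtensor x p H u j a * wtensor x p H u j b)))
  - 2 * sum3 (fun j => p j * sum3 (fun a => sum3 (fun b => D a b j * wtensor x p H u a b))).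
Proof.
  intros Hxx Hxp HE.
  apply Rminus_diag_uniq.
  (* the difference, as a combination of quantities that vanish *)
  transitivity (
   8 * sum3 (fun k => F_dot_x x F k * sum3 (fun j => p j * H j k))
   + 2 * (dot x x - 1) * (sum3 (fun i => sum3 (fun k => F i k * sum3 (fun j => H j k * H j i)))
        + sum3 (fun j => p j * sum3 (fun i => sum3 (fun k => F i k * T j i k))))
   + 2 * sum3 (fun j => p j * pde_deriv x p H T F D u j)
   - 4 * mcontr F H * sum3 (fun k => cf x k * p k)
   - 2 * u * (mcontr F H + u * trace3 F)
   - 4 * sum3 (fun a => sum3 (fun b => p a * F a b * euler_Du x p H b))
   - 2 * (dot x x - 1) * sum3 (fun a => sum3 (fun b => p a * F a b * p b))
   - 4 * u * sum3 (fun b => p b * F_dot_x x F b)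
   - 2 * sum3 (fun j => 2 * (p j - u * cf x j)
                          * sum3 (fun b => F_dot_x x F b * (H j b + cf x j * p b + u * delta j b))
                        + (p j - u * cf x j) * (p j - u * cf x j) * sum3 (fun b => F_dot_x x F b * cf x b))
   + 4 * sum3 (fun j => sum3 (fun b => p j * p b * DF_dot_x x F D b j))
   - 2 * u * sum3 (fun j => sum3 (fun b => p j * cf x b * DF_dot_x x F D b j))
   + 2 * u * sum3 (fun j => p j * F_dot_x x F j)).
  - unfold hess_rho, wtensor, F_dot_x, euler_Du, DF_dot_x, pde_deriv, mcontr, trace3, delta, dot, sum3.
    cbn [ebase cf Nat.eqb]. unfold mk3; cbn [fst snd].
    sort_indices H_sym F_sym D_sym T_sym23 T_sym12.
    ring.
  - rewrite Hxx, Hxp, pde. unfold sum3.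
    rewrite !F_tangent, !HE, !DF_tangent, !pde_diff by lia. ring.
Qed.

Lemma contr_hess_phi_eq E :
  sum3 (fun i => sum3 (fun k => F i k * hess_phi x p H T u E i k)) =
  - sum3 (fun j => cf E j * sum3 (fun a => sum3 (fun b => D a b j * wtensor x p H u a b))).
Proof.
  apply Rminus_diag_uniq.
  transitivity (
    sum3 (fun k => F_dot_x x F k * (- cf x k * sum3 (fun j => cf E j * p j) + sum3 (fun j => cf E j * H j k)
       - p k * sum3 (fun j => cf E j * cf x j) - u * cf E k
       + 3 * u * sum3 (fun j => cf E j * cf x j) * cf x k))
    + sum3 (fun i => F_dot_x x F i * (sum3 (fun j => cf E j * H j i) - p i * sum3 (fun j => cf E j * cf x j)
                                      - u * cf E i))
    + sum3 (fun j => cf E j * pde_deriv x p H T F D u j)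
    - sum3 (fun j => cf E j * cf x j) * (mcontr F H + u * trace3 F)
    + 2 * sum3 (fun j => sum3 (fun b => cf E j * p b * DF_dot_x x F D b j))
    - u * sum3 (fun j => sum3 (fun b => cf E j * cf x b * DF_dot_x x F D b j))
    + u * sum3 (fun j => cf E j * F_dot_x x F j)).
  - unfold hess_phi, wtensor, F_dot_x, DF_dot_x, pde_deriv, mcontr, trace3, delta, dot, sum3.
    cbn [ebase cf Nat.eqb]. unfold mk3; cbn [fst snd].
    sort_indices H_sym F_sym D_sym T_sym23 T_sym12.
    ring.
  - rewrite pde. unfold sum3.
    rewrite !F_tangent, !DF_tangent, !pde_diff by lia. ring.
Qed.

End PointwiseIdentities.

Lemma d_cf y i j : derivable_pt_lim (fun t => cf (line y i t) j) 0 (cf (ebase i) j).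
Proof.
  apply (d_ext (fun t => cf y j + t * cf (ebase i) j)); [intros t; rewrite cf_line; ring|].
  dcalc_with fail. ring.
Qed.

Lemma d_dot_line y i : derivable_pt_lim (fun t => dot (line y i t) (line y i t)) 0
  (2 * sum3 (fun j => cf y j * cf (ebase i) j)).
Proof.
  pose proof (d_cf y i 0); pose proof (d_cf y i 1); pose proof (d_cf y i 2).
  unfold dot, sum3. dcalc_with eassumption. rewrite !line_0. ring.
Qed.

Lemma d_norm3_line y i : y <> mk3 0 0 0 ->
  derivable_pt_lim (fun t => norm3 (line y i t)) 0 (sum3 (fun j => cf y j * cf (ebase i) j) / norm3 y).
Proof.
  intros H. pose proof (norm3_pos y H) as HN. unfold norm3 in *.
  eapply d_eq; [apply d_sqrt; [apply d_dot_line | cbv beta; rewrite line_0; apply dot_self_pos; auto]|].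
  cbv beta; rewrite line_0. field. lra.
Qed.

Lemma d_inv_norm3_line y i : y <> mk3 0 0 0 ->
  derivable_pt_lim (fun t => / norm3 (line y i t)) 0
    (- sum3 (fun j => cf y j * cf (ebase i) j) / (norm3 y * norm3 y * norm3 y)).
Proof.
  intros H. pose proof (norm3_pos y H).
  eapply d_eq; [apply d_inv; [apply d_norm3_line; auto | cbv beta; rewrite line_0; lra]|].
  cbv beta; rewrite line_0. field. lra.
Qed.

Lemma cf_normalize z j : z <> mk3 0 0 0 -> cf z j = norm3 z * cf (vscal (/ norm3 z) z) j.
Proof. intros H. pose proof (norm3_pos z H). rewrite cf_vscal. field. lra. Qed.

Definition grad_rho_cone (u : R3 -> R) (Du : nat -> R3 -> R) (D2u : nat -> nat -> R3 -> R)
  (i : nat) (z : R3) : R :=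
  2 * sum3 (fun j => cf z j * cf (ebase i) j) * sum3 (fun j => Du j z * Du j z)
  + dot z z * (2 * sum3 (fun j => Du j z * D2u j i z)) + 2 * (ext0 u z * Du i z).

Definition grad_phi_cone (E : R3) (u : R3 -> R) (Du : nat -> R3 -> R) (D2u : nat -> nat -> R3 -> R)
  (i : nat) (z : R3) : R :=
  sum3 (fun j => cf z j * cf (ebase i) j) * / norm3 z * sum3 (fun j => cf E j * Du j z)
  + norm3 z * sum3 (fun j => cf E j * D2u j i z)
  + Du i z * sum3 (fun j => cf E j * cf z j) * / norm3 z
  + ext0 u z * (sum3 (fun j => cf E j * cf (ebase i) j) * / norm3 z
      + sum3 (fun j => cf E j * cf z j) * (- sum3 (fun j => cf z j * cf (ebase i) j)
                                           * (/ norm3 z * / norm3 z * / norm3 z))).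

Definition W_at (u : R3 -> R) (Du : nat -> R3 -> R) (D2u : nat -> nat -> R3 -> R) (x : R3)
  : nat -> nat -> R :=
  wtensor x (fun j => Du j x) (fun a b => D2u a b x) (u x).

Section Equation.
Variables (U : R3 -> Prop) (F : nat -> nat -> R3 -> R) (DF : nat -> nat -> nat -> R3 -> R)
  (u : R3 -> R) (Du : nat -> R3 -> R) (D2u : nat -> nat -> R3 -> R) (D3u : nat -> nat -> nat -> R3 -> R).
Hypothesis HU : S2open U.
Hypothesis F_sym : forall x, U x -> forall a b, (a < 3)%nat -> (b < 3)%nat -> F a b x = F b a x.
Hypothesis F_tangent : forall x, U x -> forall a, (a < 3)%nat -> sum3 (fun b => F a b x * cf x b) = 0.
Hypothesis F_partial : forall a b c, (a < 3)%nat -> (b < 3)%nat -> (c < 3)%nat ->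
  is_partial (ext0 (F a b)) c (DF a b c) (cone U).
Hypothesis DF_cont : forall a b c, (a < 3)%nat -> (b < 3)%nat -> (c < 3)%nat -> cont3 (DF a b c) (cone U).
Hypothesis u_partial : forall i, (i < 3)%nat -> is_partial (ext0 u) i (Du i) (cone U).
Hypothesis Du_partial : forall i j, (i < 3)%nat -> (j < 3)%nat -> is_partial (Du i) j (D2u i j) (cone U).
Hypothesis D2u_partial : forall i j k, (i < 3)%nat -> (j < 3)%nat -> (k < 3)%nat ->
  is_partial (D2u i j) k (D3u i j k) (cone U).
Hypothesis Du_cont : forall i, (i < 3)%nat -> cont3 (Du i) (cone U).
Hypothesis D2u_cont : forall i j, (i < 3)%nat -> (j < 3)%nat -> cont3 (D2u i j) (cone U).
Hypothesis D3u_cont : forall i j k, (i < 3)%nat -> (j < 3)%nat -> (k < 3)%nat -> cont3 (D3u i j k) (cone U).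
Hypothesis pde : forall x, U x -> contr F D2u x + u x * sum3 (fun a => F a a x) = 0.

Lemma ext0_homogeneous f : homogeneous_on U 0 (ext0 f).
Proof. intros y s Hy Hs. rewrite ext0_vscal by (auto; apply Hy). ring. Qed.

Lemma Du_homogeneous i : (i < 3)%nat -> homogeneous_on U 1 (Du i).
Proof. intros Hi. exact (is_partial_homogeneous U _ _ i 0 HU (ext0_homogeneous u) (u_partial i Hi)). Qed.

Lemma D2u_homogeneous i j : (i < 3)%nat -> (j < 3)%nat -> homogeneous_on U 2 (D2u i j).
Proof.
  intros Hi Hj. exact (is_partial_homogeneous U _ _ j 1 HU (Du_homogeneous i Hi) (Du_partial i j Hi Hj)).
Qed.

Lemma euler_u y : cone U y -> sum3 (fun k => cf y k * Du k y) = 0.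
Proof.
  intros Hy. rewrite (euler_homogeneous U (ext0 u) Du 0 y HU Hy (ext0_homogeneous u) u_partial Du_cont).
  simpl; ring.
Qed.

Lemma euler_Du_eq i y : (i < 3)%nat -> cone U y -> sum3 (fun k => cf y k * D2u i k y) = - Du i y.
Proof.
  intros Hi Hy. rewrite (euler_homogeneous U (Du i) (D2u i) 1 y HU Hy (Du_homogeneous i Hi)).
  - simpl; ring.
  - intros; apply Du_partial; auto.
  - intros; apply D2u_cont; auto.
Qed.

Lemma D2u_sym i j y : (i < 3)%nat -> (j < 3)%nat -> cone U y -> D2u i j y = D2u j i y.
Proof. intros Hi Hj Hy. apply (schwarz U (ext0 u) (Du i) (Du j) _ _ i j y HU Hy); auto. Qed.

Lemma D3u_sym23 i j k y : (i < 3)%nat -> (j < 3)%nat -> (k < 3)%nat -> cone U y ->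
  D3u i j k y = D3u i k j y.
Proof. intros Hi Hj Hk Hy. apply (schwarz U (Du i) (D2u i j) (D2u i k) _ _ j k y HU Hy); auto. Qed.

Lemma D3u_sym12 i j k y : (i < 3)%nat -> (j < 3)%nat -> (k < 3)%nat -> cone U y ->
  D3u i j k y = D3u j i k y.
Proof.
  intros Hi Hj Hk Hy.
  apply (is_partial_eq_on U (D2u i j) (D2u j i) (D3u i j k) k y _ HU Hy (D2u_partial i j k Hi Hj Hk)).
  - intros z Hz. apply D2u_sym; auto.
  - exact (D2u_partial j i k Hj Hi Hk y Hy).
Qed.

Lemma euler_DF a b y : (a < 3)%nat -> (b < 3)%nat -> cone U y ->
  sum3 (fun c => cf y c * DF a b c y) = 0.
Proof.
  intros Ha Hb Hy. rewrite (euler_homogeneous U (ext0 (F a b)) (DF a b) 0 y HU Hy (ext0_homogeneous _)).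
  - simpl; ring.
  - intros; apply F_partial; auto.
  - intros; apply DF_cont; auto.
Qed.

Lemma DF_sym a b c y : (a < 3)%nat -> (b < 3)%nat -> (c < 3)%nat -> cone U y ->
  DF a b c y = DF b a c y.
Proof.
  intros Ha Hb Hc Hy.
  apply (is_partial_eq_on U (ext0 (F a b)) (ext0 (F b a)) (DF a b c) c y _ HU Hy (F_partial a b c Ha Hb Hc)).
  - intros z Hz. unfold ext0. apply F_sym; auto. apply Hz.
  - exact (F_partial b a c Hb Ha Hc y Hy).
Qed.

Lemma DF_tangent a c x : (a < 3)%nat -> (c < 3)%nat -> U x ->
  sum3 (fun b => DF a b c x * cf x b) + F a c x = 0.
Proof.
  intros Ha Hc Hx.
  pose proof (cone_sphere U x HU Hx) as Hy.
  assert (Hn : norm3 x = 1) by (apply (proj1 HU); auto).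
  assert (L : derivable_pt_lim (fun t => sum3 (fun b => ext0 (F a b) (line x c t) * cf (line x c t) b)) 0
     (sum3 (fun b => DF a b c x * cf x b + ext0 (F a b) x * cf (ebase c) b))).
  { unfold sum3. dcalc_with ltac:(first [apply d_cf | eapply (F_partial _ _ c); [lia .. | exact Hy]]).
    rewrite !line_0. ring. }
  apply (derivative_vanishing_on U (fun z => sum3 (fun b => ext0 (F a b) z * cf z b)) x c _ HU Hy) in L.
  - rewrite <- L. unfold sum3. rewrite !ext0_sphere by auto.
    dest3 c; cbn [ebase cf]; unfold mk3; cbn [fst snd]; ring.
  - intros z [Hz0 HzU].
    transitivity (norm3 z * sum3 (fun b => F a b (vscal (/ norm3 z) z) * cf (vscal (/ norm3 z) z) b)).
    + unfold sum3, ext0. rewrite (cf_normalize z 0), (cf_normalize z 1), (cf_normalize z 2) by auto. ring.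
    + rewrite F_tangent by auto. ring.
Qed.

Lemma pde_deriv_zero c x : (c < 3)%nat -> U x ->
  pde_deriv x (fun i => Du i x) (fun i j => D2u i j x) (fun i j k => D3u i j k x)
    (fun a b => F a b x) (fun a b c => DF a b c x) (u x) c = 0.
Proof.
  intros Hc Hx.
  pose proof (cone_sphere U x HU Hx) as Hy.
  assert (Hn : norm3 x = 1) by (apply (proj1 HU); auto).
  set (G := fun z => dot z z * mcontr (fun a b => ext0 (F a b) z) (fun a b => D2u a b z)
                     + ext0 u z * trace3 (fun a b => ext0 (F a b) z)).
  assert (HG : forall z, cone U z -> G z = 0).
  { intros z Hz. pose proof (norm3_pos z (proj1 Hz)) as HN.
    assert (Hs : 0 < / norm3 z) by (apply Rinv_0_lt_compat; auto).
    rewrite <- (pde (vscal (/ norm3 z) z) (proj2 Hz)).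
    unfold G, mcontr, trace3, contr, sum3, ext0.
    do 9 (match goal with |- context [D2u ?a ?b z] =>
      rewrite <- (D2u_homogeneous a b ltac:(lia) ltac:(lia) z (/ norm3 z) Hz Hs) end).
    rewrite <- norm3_sqr. field. lra. }
  assert (L : derivable_pt_lim (fun t => G (line x c t)) 0
    (2 * sum3 (fun j => cf x j * cf (ebase c) j) * mcontr (fun a b => F a b x) (fun a b => D2u a b x)
     + dot x x * sum3 (fun a => sum3 (fun b => DF a b c x * D2u a b x + F a b x * D3u a b c x))
     + Du c x * trace3 (fun a b => F a b x) + u x * sum3 (fun a => DF a a c x))).
  { unfold G, mcontr, trace3, sum3.
    dcalc_with ltac:(first [ apply d_dot_line | eapply (F_partial _ _ c); [lia .. | exact Hy]
                           | eapply (D2u_partial _ _ c); [lia .. | exact Hy]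
                           | eapply (u_partial c); [lia | exact Hy] ]).
    rewrite ?line_0, !ext0_sphere by auto. ring. }
  apply (derivative_vanishing_on U G x c _ HU Hy HG) in L. rewrite <- L.
  unfold pde_deriv. rewrite <- norm3_sqr, Hn. unfold mcontr, trace3, sum3.
  dest3 c; cbn [ebase cf]; unfold mk3; cbn [fst snd]; ring.
Qed.

Lemma Du_normalize j z : (j < 3)%nat -> cone U z -> Du j (vscal (/ norm3 z) z) = norm3 z * Du j z.
Proof.
  intros Hj Hz. pose proof (norm3_pos z (proj1 Hz)) as HN.
  assert (Hs : 0 < / norm3 z) by (apply Rinv_0_lt_compat; auto).
  rewrite <- (Du_homogeneous j Hj z (/ norm3 z) Hz Hs). field. lra.
Qed.

Lemma ext0_rho_eq z : cone U z ->
  ext0 (rho_u u Du) z = dot z z * sum3 (fun j => Du j z * Du j z) + ext0 u z * ext0 u z.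
Proof.
  intros Hz. pose proof (norm3_pos z (proj1 Hz)) as HN.
  pose proof (euler_u z Hz) as E1.
  unfold ext0 at 1. unfold rho_u, Xu, grad. fold (ext0 u z).
  replace (dot (vadd _ _) (vadd _ _)) with
    (sum3 (fun j => (Du j (vscal (/ norm3 z) z) + ext0 u z * cf (vscal (/ norm3 z) z) j) *
                    (Du j (vscal (/ norm3 z) z) + ext0 u z * cf (vscal (/ norm3 z) z) j)))
    by (unfold dot, sum3; rewrite !cf_vadd, !cf_vscal; reflexivity).
  unfold sum3. rewrite !Du_normalize by (auto; lia). rewrite !cf_vscal.
  transitivity (dot z z * sum3 (fun j => Du j z * Du j z) + ext0 u z * ext0 u z
    + 2 * ext0 u z * sum3 (fun k => cf z k * Du k z)
    + ext0 u z * ext0 u z * (sum3 (fun j => cf z j * cf z j) / (norm3 z * norm3 z) - 1)).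
  - rewrite <- norm3_sqr. unfold sum3. field. lra.
  - rewrite E1. fold (dot z z). rewrite <- norm3_sqr. unfold sum3. field. lra.
Qed.

Lemma ext0_phi_eq E z : cone U z ->
  ext0 (phi_E E u Du) z = norm3 z * sum3 (fun j => cf E j * Du j z)
     + ext0 u z * sum3 (fun j => cf E j * cf z j) * / norm3 z.
Proof.
  intros Hz. pose proof (norm3_pos z (proj1 Hz)) as HN.
  unfold ext0 at 1. unfold phi_E, Xu, grad. fold (ext0 u z).
  unfold dot, sum3. rewrite !cf_vadd, !cf_vscal. cbn [cf mk3]. unfold mk3; cbn [fst snd].
  rewrite !Du_normalize by (auto; lia). field. lra.
Qed.

Ltac u_derivs Hz := first
  [ apply d_cf | apply d_dot_line
  | eapply u_partial; [lia | exact Hz]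
  | eapply Du_partial; [lia .. | exact Hz]
  | eapply D2u_partial; [lia .. | exact Hz]
  | apply d_norm3_line; exact (proj1 Hz)
  | apply d_inv_norm3_line; exact (proj1 Hz) ].

Lemma partial_rho_eq (g : nat -> R3 -> R) i z :
  (forall i, (i < 3)%nat -> is_partial (ext0 (rho_u u Du)) i (g i) (cone U)) ->
  (i < 3)%nat -> cone U z -> g i z = grad_rho_cone u Du D2u i z.
Proof.
  intros Hg Hi Hz.
  apply (is_partial_eq_on U _ _ (g i) i z _ HU Hz (Hg i Hi) ext0_rho_eq).
  unfold sum3. dcalc_with ltac:(u_derivs Hz). rewrite ?line_0. unfold grad_rho_cone, sum3. ring.
Qed.

Lemma hess_rho_eq (g : nat -> R3 -> R) (h : nat -> nat -> R3 -> R) i k x :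
  (forall i, (i < 3)%nat -> is_partial (ext0 (rho_u u Du)) i (g i) (cone U)) ->
  (forall i j, (i < 3)%nat -> (j < 3)%nat -> is_partial (g i) j (h i j) (cone U)) ->
  (i < 3)%nat -> (k < 3)%nat -> U x ->
  h i k x = hess_rho x (fun j => Du j x) (fun a b => D2u a b x) (fun a b c => D3u a b c x) (u x) i k.
Proof.
  intros Hg Hh Hi Hk Hx.
  pose proof (cone_sphere U x HU Hx) as Hz.
  assert (Hn : norm3 x = 1) by (apply (proj1 HU); auto).
  apply (is_partial_eq_on U (g i) (grad_rho_cone u Du D2u i) (h i k) k x _ HU Hz (Hh i k Hi Hk)
           (fun z => partial_rho_eq g i z Hg Hi)).
  unfold grad_rho_cone, sum3. dcalc_with ltac:(u_derivs Hz).
  rewrite ?line_0, ext0_sphere by auto. unfold hess_rho, sum3. ring.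
Qed.

Lemma partial_phi_eq E (g : nat -> R3 -> R) i z :
  (forall i, (i < 3)%nat -> is_partial (ext0 (phi_E E u Du)) i (g i) (cone U)) ->
  (i < 3)%nat -> cone U z -> g i z = grad_phi_cone E u Du D2u i z.
Proof.
  intros Hg Hi Hz. pose proof (norm3_pos z (proj1 Hz)) as HN.
  apply (is_partial_eq_on U _ _ (g i) i z _ HU Hz (Hg i Hi) (ext0_phi_eq E)).
  unfold sum3. dcalc_with ltac:(u_derivs Hz). rewrite ?line_0. unfold grad_phi_cone, sum3. field. lra.
Qed.

Lemma hess_phi_eq E (g : nat -> R3 -> R) (h : nat -> nat -> R3 -> R) i k x :
  (forall i, (i < 3)%nat -> is_partial (ext0 (phi_E E u Du)) i (g i) (cone U)) ->
  (forall i j, (i < 3)%nat -> (j < 3)%nat -> is_partial (g i) j (h i j) (cone U)) ->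
  (i < 3)%nat -> (k < 3)%nat -> U x ->
  h i k x = hess_phi x (fun j => Du j x) (fun a b => D2u a b x) (fun a b c => D3u a b c x) (u x) E i k.
Proof.
  intros Hg Hh Hi Hk Hx.
  pose proof (cone_sphere U x HU Hx) as Hz.
  assert (Hn : norm3 x = 1) by (apply (proj1 HU); auto).
  apply (is_partial_eq_on U (g i) (grad_phi_cone E u Du D2u i) (h i k) k x _ HU Hz (Hh i k Hi Hk)
           (fun z => partial_phi_eq E g i z Hg Hi)).
  unfold grad_phi_cone, sum3. dcalc_with ltac:(u_derivs Hz).
  rewrite ?line_0, ext0_sphere, Hn by auto. unfold hess_phi, sum3. cbv zeta. field.
Qed.

Variables lam Lam K : R.
Hypothesis lam_pos : 0 < lam.
Hypothesis lam_le_Lam : lam <= Lam.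
Hypothesis elliptic : forall x xi, U x -> dot xi x = 0 ->
  lam * dot xi xi <= quadF F x xi <= Lam * dot xi xi.
Hypothesis DF_bound : forall x, U x -> forall a b c, (a < 3)%nat -> (b < 3)%nat -> (c < 3)%nat ->
  Rabs (DF a b c x) <= K.

Lemma dot_sphere x : U x -> dot x x = 1.
Proof. intros Hx. rewrite <- norm3_sqr, (proj1 HU x Hx). ring. Qed.

Ltac pointwise_fact Hx :=
  let Hy := fresh in pose proof (cone_sphere U _ HU Hx) as Hy; intros;
  first
  [ solve [apply D2u_sym; auto] | solve [apply F_sym; auto] | solve [apply DF_sym; auto]
  | solve [apply D3u_sym23; auto] | solve [apply D3u_sym12; auto]
  | solve [unfold F_dot_x; apply F_tangent; auto] | solve [unfold DF_dot_x; apply DF_tangent; auto]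
  | solve [apply pde; auto] | solve [apply pde_deriv_zero; auto] | solve [apply dot_sphere; auto]
  | solve [apply euler_u; auto] | solve [unfold euler_Du; rewrite euler_Du_eq; auto; ring] ].

Lemma W_sym x : U x -> forall a b, (a < 3)%nat -> (b < 3)%nat ->
  W_at u Du D2u x a b = W_at u Du D2u x b a.
Proof.
  intros Hx a b Ha Hb. unfold W_at, wtensor, delta.
  rewrite (D2u_sym a b x), Nat.eqb_sym by (auto; apply cone_sphere; auto). ring.
Qed.

Lemma W_tangent x : U x -> forall a, (a < 3)%nat -> sum3 (fun b => W_at u Du D2u x a b * cf x b) = 0.
Proof.
  intros Hx a Ha. pose proof (cone_sphere U x HU Hx) as Hy.
  transitivity ((sum3 (fun k => cf x k * D2u a k x) + Du a x) + cf x a * sum3 (fun k => cf x k * Du k x)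
                + (Du a x - u x * cf x a) * (dot x x - 1)).
  - unfold W_at, wtensor, delta, dot, sum3.
    dest3 a; cbn [Nat.eqb]; rewrite ?(D2u_sym 1%nat 0%nat x), ?(D2u_sym 2%nat 0%nat x),
      ?(D2u_sym 2%nat 1%nat x) by (auto; lia); ring.
  - rewrite euler_Du_eq, euler_u, dot_sphere by auto. ring.
Qed.

Lemma W_F_traceless x : U x -> sum3 (fun a => sum3 (fun b => F a b x * W_at u Du D2u x a b)) = 0.
Proof.
  intros Hx.
  transitivity (contr F D2u x + u x * sum3 (fun a => F a a x)
                + 2 * sum3 (fun b => Du b x * F_dot_x x (fun a b => F a b x) b)
                - u x * sum3 (fun a => cf x a * F_dot_x x (fun a b => F a b x) a)).
  - unfold W_at, wtensor, delta, contr, F_dot_x, sum3. cbn [Nat.eqb].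
    rewrite ?(F_sym x Hx 1%nat 0%nat), ?(F_sym x Hx 2%nat 0%nat), ?(F_sym x Hx 2%nat 1%nat) by lia. ring.
  - assert (HF : forall b, (b < 3)%nat -> F_dot_x x (fun a b => F a b x) b = 0)
      by (intros; apply F_tangent; auto).
    rewrite pde by auto. unfold sum3. rewrite !HF by lia. ring.
Qed.

Section Rho.
Variables (g : nat -> R3 -> R) (h : nat -> nat -> R3 -> R).
Hypothesis g_partial : forall i, (i < 3)%nat -> is_partial (ext0 (rho_u u Du)) i (g i) (cone U).
Hypothesis h_partial : forall i j, (i < 3)%nat -> (j < 3)%nat -> is_partial (g i) j (h i j) (cone U).

Lemma grad_rho_at x : U x -> grad g x = vscal 2 (mat_vec (W_at u Du D2u x) (grad Du x)).
Proof.
  intros Hx. pose proof (cone_sphere U x HU Hx) as Hy.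
  assert (Gi : forall i, (i < 3)%nat ->
            g i x = 2 * sum3 (fun b => W_at u Du D2u x i b * cf (grad Du x) b)).
  { intros i Hi. rewrite (partial_rho_eq g i x g_partial Hi Hy).
    unfold grad_rho_cone. rewrite dot_sphere, ext0_sphere by (auto; apply (proj1 HU); auto).
    transitivity (2 * sum3 (fun b => W_at u Du D2u x i b * cf (grad Du x) b)
                  + 2 * (u x * cf x i - Du i x) * sum3 (fun k => cf x k * Du k x)).
    - unfold W_at, wtensor, delta, grad, sum3.
      dest3 i; cbn [Nat.eqb ebase cf]; unfold mk3; cbn [fst snd];
        rewrite ?(D2u_sym 1%nat 0%nat x), ?(D2u_sym 2%nat 0%nat x), ?(D2u_sym 2%nat 1%nat x) by (auto; lia);
        ring.
    - rewrite euler_u by auto. ring. }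
  unfold grad at 1. unfold mat_vec. vec_ext; cbn [cf mk3 fst snd]; rewrite Gi by lia; reflexivity.
Qed.

Lemma contr_hess_rho_at x : U x ->
  contr F h x =
  2 * sum3 (fun j => sum3 (fun a => sum3 (fun b =>
        F a b x * W_at u Du D2u x j a * W_at u Du D2u x j b)))
  - 2 * sum3 (fun j => cf (grad Du x) j * sum3 (fun a => sum3 (fun b =>
        DF a b j x * W_at u Du D2u x a b))).
Proof.
  intros Hx.
  transitivity (sum3 (fun i => sum3 (fun k => F i k x *
     hess_rho x (fun j => Du j x) (fun a b => D2u a b x) (fun a b c => D3u a b c x) (u x) i k))).
  { unfold contr, sum3. rewrite !(hess_rho_eq g h _ _ x g_partial h_partial) by (auto; lia). reflexivity. }
  rewrite (contr_hess_rho_eq x (fun j => Du j x) (fun a b => D2u a b x) (fun a b => F a b x)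
             (fun a b c => D3u a b c x) (fun a b c => DF a b c x) (u x)); try pointwise_fact Hx.
  reflexivity.
Qed.

Lemma rho_estimate x : U x -> contr F h x >= - estimate_const lam Lam K * norm3 (grad g x).
Proof.
  intros Hx. pose proof (cone_sphere U x HU Hx) as Hy.
  rewrite contr_hess_rho_at, grad_rho_at, norm3_vscal, (Rabs_pos_eq 2) by (auto; lra).
  pose proof (quad_rows_nonneg lam Lam x (W_at u Du D2u x) (fun a b => F a b x) lam_pos
                (W_tangent x Hx) (fun xi => elliptic x xi Hx)).
  pose proof (abs_dir_contr_le lam Lam K x (grad Du x) (W_at u Du D2u x) (fun a b => F a b x)
                (fun a b c => DF a b c x) lam_pos lam_le_Lam (dot_sphere x Hx) (euler_u x Hy)
                (W_sym x Hx) (W_tangent x Hx) (F_sym x Hx) (fun xi => elliptic x xi Hx)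
                (W_F_traceless x Hx) (DF_bound x Hx))
    as Hb.
  apply Rabs_le_inv in Hb. cbv beta in *. lra.
Qed.

End Rho.

Section Phi.
Variables (E : R3) (g : nat -> R3 -> R) (h : nat -> nat -> R3 -> R).
Hypothesis g_partial : forall i, (i < 3)%nat -> is_partial (ext0 (phi_E E u Du)) i (g i) (cone U).
Hypothesis h_partial : forall i j, (i < 3)%nat -> (j < 3)%nat -> is_partial (g i) j (h i j) (cone U).

Lemma grad_phi_at x : U x -> grad g x = mat_vec (W_at u Du D2u x) (vsub E (vscal (dot E x) x)).
Proof.
  intros Hx. pose proof (cone_sphere U x HU Hx) as Hy.
  assert (Hn : norm3 x = 1) by (apply (proj1 HU); auto).
  assert (Gi : forall i, (i < 3)%nat ->
            g i x = sum3 (fun b => W_at u Du D2u x i b * cf (vsub E (vscal (dot E x) x)) b)).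
  { intros i Hi. rewrite (partial_phi_eq E g i x g_partial Hi Hy).
    unfold grad_phi_cone. rewrite Hn, Rinv_1, ext0_sphere by auto.
    transitivity (sum3 (fun b => W_at u Du D2u x i b * cf (vsub E (vscal (dot E x) x)) b)
                  + dot E x * sum3 (fun b => W_at u Du D2u x i b * cf x b)).
    - unfold W_at, wtensor, delta, dot, sum3. rewrite !cf_vsub, !cf_vscal.
      dest3 i; cbn [Nat.eqb ebase cf]; unfold mk3; cbn [fst snd];
        rewrite ?(D2u_sym 1%nat 0%nat x), ?(D2u_sym 2%nat 0%nat x), ?(D2u_sym 2%nat 1%nat x) by (auto; lia);
        ring.
    - rewrite W_tangent by auto. ring. }
  unfold grad at 1. unfold mat_vec. vec_ext; cbn [cf mk3 fst snd]; rewrite Gi by lia; reflexivity.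
Qed.

Lemma contr_hess_phi_at x : U x ->
  contr F h x = - sum3 (fun j => cf (vsub E (vscal (dot E x) x)) j *
                     sum3 (fun a => sum3 (fun b => DF a b j x * W_at u Du D2u x a b))).
Proof.
  intros Hx. pose proof (cone_sphere U x HU Hx) as Hy.
  transitivity (sum3 (fun i => sum3 (fun k => F i k x *
     hess_phi x (fun j => Du j x) (fun a b => D2u a b x) (fun a b c => D3u a b c x) (u x) E i k))).
  { unfold contr, sum3. rewrite !(hess_phi_eq E g h _ _ x g_partial h_partial) by (auto; lia). reflexivity. }
  rewrite (contr_hess_phi_eq x (fun j => Du j x) (fun a b => D2u a b x) (fun a b => F a b x)
             (fun a b c => D3u a b c x) (fun a b c => DF a b c x) (u x)); try pointwise_fact Hx.
  (* only the tangential part of E contributes, since x_c DF^{ab}_{,c} = 0 *)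
  assert (Z : sum3 (fun a => sum3 (fun b => W_at u Du D2u x a b * sum3 (fun c => cf x c * DF a b c x))) = 0).
  { apply sum3_zero; intros a Ha; apply sum3_zero; intros b Hb.
    rewrite euler_DF by auto. ring. }
  transitivity (- (sum3 (fun j => cf (vsub E (vscal (dot E x) x)) j *
                     sum3 (fun a => sum3 (fun b => DF a b j x * W_at u Du D2u x a b)))
                   + dot E x * sum3 (fun a => sum3 (fun b => W_at u Du D2u x a b
                                                      * sum3 (fun c => cf x c * DF a b c x))))).
  - unfold W_at, dot, sum3. rewrite !cf_vsub, !cf_vscal. cbv beta. ring.
  - rewrite Z. ring.
Qed.

Lemma phi_estimate x : U x -> contr F h x >= - estimate_const lam Lam K * norm3 (grad g x).
Proof.
  intros Hx.
  assert (Hxe : dot x (vsub E (vscal (dot E x) x)) = 0).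
  { transitivity (dot x E - dot E x * dot x x).
    - unfold dot, sum3. rewrite !cf_vsub, !cf_vscal. ring.
    - rewrite dot_sphere by auto. unfold dot, sum3. ring. }
  rewrite contr_hess_phi_at, grad_phi_at by auto.
  pose proof (abs_dir_contr_le lam Lam K x _ (W_at u Du D2u x) (fun a b => F a b x)
                (fun a b c => DF a b c x) lam_pos lam_le_Lam (dot_sphere x Hx) Hxe
                (W_sym x Hx) (W_tangent x Hx) (F_sym x Hx) (fun xi => elliptic x xi Hx)
                (W_F_traceless x Hx) (DF_bound x Hx))
    as Hb.
  apply Rabs_le_inv in Hb. cbv beta in *. lra.
Qed.

End Phi.

End Equation.

Theorem lemma2 :
  forall (lam Lam K : R), 0 < lam -> lam <= Lam ->
  exists C1 C2 : R,
  forall (U : R3 -> Prop) (F : nat -> nat -> R3 -> R) (DF : nat -> nat -> nat -> R3 -> R)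
         (u : R3 -> R) (Du : nat -> R3 -> R) (D2u : nat -> nat -> R3 -> R)
         (D3u : nat -> nat -> nat -> R3 -> R),
    S2open U ->
    (forall x, U x -> forall a b, (a < 3)%nat -> (b < 3)%nat -> F a b x = F b a x) ->
    (forall x, U x -> forall a, (a < 3)%nat -> sum3 (fun b => F a b x * cf x b) = 0) ->
    (forall a b c, (a < 3)%nat -> (b < 3)%nat -> (c < 3)%nat ->
       is_partial (ext0 (F a b)) c (DF a b c) (cone U) /\
       cont3 (ext0 (F a b)) (cone U) /\ cont3 (DF a b c) (cone U)) ->
    (forall x, U x -> forall a b c, (a < 3)%nat -> (b < 3)%nat -> (c < 3)%nat ->
       Rabs (F a b x) <= K /\ Rabs (DF a b c x) <= K) ->
    (forall x xi, U x -> dot xi x = 0 ->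
       lam * dot xi xi <= quadF F x xi <= Lam * dot xi xi) ->
    (forall i j k, (i < 3)%nat -> (j < 3)%nat -> (k < 3)%nat ->
       is_partial (ext0 u) i (Du i) (cone U) /\
       is_partial (Du i) j (D2u i j) (cone U) /\
       is_partial (D2u i j) k (D3u i j k) (cone U) /\
       cont3 (ext0 u) (cone U) /\ cont3 (Du i) (cone U) /\
       cont3 (D2u i j) (cone U) /\ cont3 (D3u i j k) (cone U)) ->
    (forall x, U x -> contr F D2u x + u x * sum3 (fun a => F a a x) = 0) ->
    (forall (g : nat -> R3 -> R) (h : nat -> nat -> R3 -> R),
       (forall i, (i < 3)%nat -> is_partial (ext0 (rho_u u Du)) i (g i) (cone U)) ->
       (forall i j, (i < 3)%nat -> (j < 3)%nat -> is_partial (g i) j (h i j) (cone U)) ->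
       forall x, U x -> contr F h x >= - C1 * norm3 (grad g x)) /\
    (forall (E : R3), norm3 E = 1 ->
     forall (g : nat -> R3 -> R) (h : nat -> nat -> R3 -> R),
       (forall i, (i < 3)%nat -> is_partial (ext0 (phi_E E u Du)) i (g i) (cone U)) ->
       (forall i j, (i < 3)%nat -> (j < 3)%nat -> is_partial (g i) j (h i j) (cone U)) ->
       forall x, U x -> contr F h x >= - C2 * norm3 (grad g x)).
Proof.
  intros lam Lam K Hl HL.
  exists (estimate_const lam Lam K), (estimate_const lam Lam K).
  intros U F DF u Du D2u D3u HU HFs HFt HFreg HFb Hell Hureg Hpde.
  assert (F_partial : forall a b c, (a < 3)%nat -> (b < 3)%nat -> (c < 3)%nat ->
            is_partial (ext0 (F a b)) c (DF a b c) (cone U)) by (intros; apply HFreg; auto).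
  assert (DF_cont : forall a b c, (a < 3)%nat -> (b < 3)%nat -> (c < 3)%nat ->
            cont3 (DF a b c) (cone U)) by (intros; apply HFreg; auto).
  assert (DF_bound : forall x, U x -> forall a b c, (a < 3)%nat -> (b < 3)%nat -> (c < 3)%nat ->
            Rabs (DF a b c x) <= K) by (intros; apply HFb; auto).
  assert (u_partial : forall i, (i < 3)%nat -> is_partial (ext0 u) i (Du i) (cone U))
    by (intros i Hi; apply (Hureg i 0%nat 0%nat); lia).
  assert (Du_partial : forall i j, (i < 3)%nat -> (j < 3)%nat -> is_partial (Du i) j (D2u i j) (cone U))
    by (intros i j Hi Hj; apply (Hureg i j 0%nat); lia).
  assert (D2u_partial : forall i j k, (i < 3)%nat -> (j < 3)%nat -> (k < 3)%nat ->
            is_partial (D2u i j) k (D3u i j k) (cone U)) by (intros; apply Hureg; auto).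
  assert (Du_cont : forall i, (i < 3)%nat -> cont3 (Du i) (cone U))
    by (intros i Hi; apply (Hureg i 0%nat 0%nat); lia).
  assert (D2u_cont : forall i j, (i < 3)%nat -> (j < 3)%nat -> cont3 (D2u i j) (cone U))
    by (intros i j Hi Hj; apply (Hureg i j 0%nat); lia).
  assert (D3u_cont : forall i j k, (i < 3)%nat -> (j < 3)%nat -> (k < 3)%nat ->
            cont3 (D3u i j k) (cone U)) by (intros; apply Hureg; auto).
  split.
  - intros g h Hg Hh x Hx. apply (rho_estimate U F DF u Du D2u D3u); auto.
  (* the estimate for φ_E is homogeneous in E *)
  - intros E _ g h Hg Hh x Hx. apply (phi_estimate U F DF u Du D2u D3u) with (E := E); auto.
Qed.
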